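(* Let $P$ be a normal program and $S$ a set of queries. Then $P$ LDNF-terminates with respect to $S$ if and only if $M_4\cup\mathit{ce}(P)$ LDNF-terminates with respect to $\{\mathit{solve}(Q)\mid Q\in S\}$.
   Context: A normal program has clauses whose bodies are sequences of literals (atoms $A$ or negated atoms $\neg A$), with negation as finite failure. A query LDNF-terminates for a program if its LDNF-forest (SLDNF-resolution with the leftmost selection rule) is finite; a program LDNF-terminates w.r.t. a set of queries if it does so for every query in the set. Clause encoding: a body $L_1,\dots,L_n$ ($n\ge1$) is represented as the term $(L_1,(L_2,\dots,L_n))$ with a binary functor $,/2$, a negative literal $\neg A$ as the term $\neg A$, and an empty body by the constant $\mathit{true}$; $\mathit{ce}(P)$ is the set of facts $\mathit{clause}(H,B)$, one per clause $H\leftarrow B$ of $P$; the symbols $,/2$, $\mathit{clause}$, $\mathit{solve}$ do not occur in the language of $P$. A query $Q=L_1,\dots,L_n$ is encoded in $\mathit{solve}(Q)$ in the same way. $M_4$ is the program $\mathit{solve}(\mathit{true}).$ $\mathit{solve}((A,B))\leftarrow\mathit{solve}(A),\mathit{solve}(B).$ $\mathit{solve}(\neg A)\leftarrow\neg\mathit{solve}(A).$ $\mathit{solve}(H)\leftarrow\mathit{clause}(H,B),\mathit{solve}(B).$ *)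

From Stdlib Require Import List.
Import ListNotations.
Set Implicit Arguments.

Section Syntax.
Variable Sig : Type.

Inductive term : Type :=
| Var : nat -> term
| Fn : Sig -> list term -> term.

Definition atom : Type := (Sig * list term)%type.

Inductive literal : Type :=
| Pos : atom -> literal
| Neg : atom -> literal.

Record clause : Type := mkClause { head : atom; body : list literal }.

Definition program : Type := list clause.
Definition query : Type := list literal.

Fixpoint tsubst (s : nat -> term) (t : term) : term :=
  match t with
  | Var x => s x
  | Fn f ts => Fn f (map (tsubst s) ts)
  end.

Fixpoint tvars (t : term) : list nat :=
  match t with
  | Var x => [x]
  | Fn _ ts => flat_map tvars ts
  end.

Definition asubst (s : nat -> term) (a : atom) : atom :=
  (fst a, map (tsubst s) (snd a)).
Definition avars (a : atom) : list nat := flat_map tvars (snd a).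

Definition lsubst (s : nat -> term) (l : literal) : literal :=
  match l with Pos a => Pos (asubst s a) | Neg a => Neg (asubst s a) end.
Definition lvars (l : literal) : list nat :=
  match l with Pos a => avars a | Neg a => avars a end.

Definition qsubst (s : nat -> term) (q : query) : query := map (lsubst s) q.
Definition qvars (q : query) : list nat := flat_map lvars q.

Definition csubst (s : nat -> term) (c : clause) : clause :=
  mkClause (asubst s (head c)) (qsubst s (body c)).
Definition cvars (c : clause) : list nat := avars (head c) ++ qvars (body c).

Definition ground_atom (a : atom) : Prop := avars a = [].

Definition variant (c' c : clause) : Prop :=
  exists (r r' : nat -> nat),
    (forall x, r' (r x) = x) /\ (forall x, r (r' x) = x) /\
    c' = csubst (fun x => Var (r x)) c.

Definition unifier (th : nat -> term) (a b : atom) : Prop :=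
  asubst th a = asubst th b.

Definition mgu (th : nat -> term) (a b : atom) : Prop :=
  unifier th a b /\
  forall sg, unifier sg a b ->
    exists dl, forall x, sg x = tsubst dl (th x).

Definition resolvent (P : program) (A : atom) (R : query) (Q' : query) : Prop :=
  exists c c' th,
    In c P /\ variant c' c /\
    (forall x, In x (cvars c') -> ~ In x (qvars (Pos A :: R))) /\
    mgu th A (head c') /\
    Q' = qsubst th (body c' ++ R).

(* Outcome of a (finite) LDNF-tree: successful (contains a success leaf),
   finitely failed (all leaves failed), or neither (some leaf floundered /
   blocked on a subsidiary tree that is neither successful nor failed). *)
Inductive outcome : Type := Success | Failure | Stuck.

(* ldnf P Q o : the LDNF-forest of Q in P (main tree together with all
   subsidiary trees, recursively) is finite, and the main tree has outcome o. *)
Inductive ldnf (P : program) : query -> outcome -> Prop :=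
| ldnf_nil : ldnf P [] Success
| ldnf_pos_succ : forall A R,
    (forall Q', resolvent P A R Q' -> exists o, ldnf P Q' o) ->
    (exists Q', resolvent P A R Q' /\ ldnf P Q' Success) ->
    ldnf P (Pos A :: R) Success
| ldnf_pos_fail : forall A R,
    (forall Q', resolvent P A R Q' -> ldnf P Q' Failure) ->
    ldnf P (Pos A :: R) Failure
| ldnf_pos_stuck : forall A R,
    (forall Q', resolvent P A R Q' -> ldnf P Q' Failure \/ ldnf P Q' Stuck) ->
    (exists Q', resolvent P A R Q' /\ ldnf P Q' Stuck) ->
    ldnf P (Pos A :: R) Stuck
| ldnf_neg_flounder : forall A R,
    ~ ground_atom A -> ldnf P (Neg A :: R) Stuck
| ldnf_neg_sub_succ : forall A R,
    ground_atom A -> ldnf P [Pos A] Success -> ldnf P (Neg A :: R) Failure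
| ldnf_neg_sub_fail : forall A R o,
    ground_atom A -> ldnf P [Pos A] Failure -> ldnf P R o ->
    ldnf P (Neg A :: R) o
| ldnf_neg_sub_stuck : forall A R,
    ground_atom A -> ldnf P [Pos A] Stuck -> ldnf P (Neg A :: R) Stuck.

Definition ldnf_terminates (P : program) (Q : query) : Prop :=
  exists o, ldnf P Q o.

Definition ldnf_terminates_wrt (P : program) (S : query -> Prop) : Prop :=
  forall Q, S Q -> ldnf_terminates P Q.

End Syntax.

Arguments Var {Sig}.

Inductive meta_sym (Sig : Type) : Type :=
| Orig : Sig -> meta_sym Sig
| CommaS : meta_sym Sig
| NegS : meta_sym Sig
| TrueS : meta_sym Sig
| ClauseS : meta_sym Sig
| SolveS : meta_sym Sig.

Arguments CommaS {Sig}.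
Arguments NegS {Sig}.
Arguments TrueS {Sig}.
Arguments ClauseS {Sig}.
Arguments SolveS {Sig}.

Section Encoding.
Variable Sig : Type.
Notation mterm := (term (meta_sym Sig)).

Fixpoint lift_term (t : term Sig) : mterm :=
  match t with
  | Var x => Var x
  | Fn f ts => Fn (Orig f) (map lift_term ts)
  end.

Definition enc_atom (a : atom Sig) : mterm :=
  Fn (Orig (fst a)) (map lift_term (snd a)).

Definition enc_lit (l : literal Sig) : mterm :=
  match l with
  | Pos a => enc_atom a
  | Neg a => Fn NegS [enc_atom a]
  end.

Fixpoint enc_body (q : query Sig) : mterm :=
  match q with
  | [] => Fn TrueS []
  | [l] => enc_lit l
  | l :: q' => Fn CommaS [enc_lit l; enc_body q']
  end.

Definition ce (P : program Sig) : program (meta_sym Sig) :=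
  map (fun c => mkClause (ClauseS, [enc_atom (head c); enc_body (body c)]) [])
      P.

(* M4 (variables: A,H = Var 0, B = Var 1) *)
Definition M4 : program (meta_sym Sig) :=
  [ mkClause (SolveS, [Fn TrueS []]) [];
    mkClause (SolveS, [Fn CommaS [Var 0; Var 1]])
             [Pos (SolveS, [Var 0]); Pos (SolveS, [Var 1])];
    mkClause (SolveS, [Fn NegS [Var 0]]) [Neg (SolveS, [Var 0])];
    mkClause (SolveS, [Var 0])
             [Pos (ClauseS, [Var 0; Var 1]); Pos (SolveS, [Var 1])] ].

Definition solve_query (Q : query Sig) : query (meta_sym Sig) :=
  [Pos (SolveS, [enc_body Q])].

End Encoding.

(* The meta-interpreter simulates LDNF-resolution step by step.  The object query
   [q1 ++ ... ++ qn] is represented by the meta query [solve(q1), ..., solve(qn)].  The first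
   three clauses of M4 only reshape such a query (true, conjunction, negation), which a weight
   on the [qi] bounds, while the fourth turns [solve(A)] into [clause(A, Y), solve(Y)].  The
   resolvents of [clause(A, Y)] against ce(P) correspond, up to renaming, to the LD-resolvents
   of [A] against P: a meta mgu restricted to object variables is the lift of an object mgu,
   and conversely.  Every other resolvent is a goal [clause(t, Y)] with [t] headed by a meta
   symbol, which fails finitely.  Induction on finite LDNF-forests, in both directions, then
   shows that a query and its representation have finite forests with the same outcome. *)

From Pilot Require Import Defs.
From Stdlib Require Import List Lia Arith ClassicalEpsilon.
Import ListNotations.
Set Implicit Arguments.

(** * Induction on finite LDNF-forests *)

Section LdnfInduction.
Variable Sig : Type.
Variable P : program Sig.
Variable Pr : query Sig -> outcome -> Prop.
Hypothesis Pr_nil : Pr [] Success.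
Hypothesis Pr_pos_succ : forall A R,
  (forall Q', resolvent P A R Q' -> exists o, ldnf P Q' o /\ Pr Q' o) ->
  (exists Q', resolvent P A R Q' /\ ldnf P Q' Success /\ Pr Q' Success) ->
  Pr (Pos A :: R) Success.
Hypothesis Pr_pos_fail : forall A R,
  (forall Q', resolvent P A R Q' -> ldnf P Q' Failure /\ Pr Q' Failure) ->
  Pr (Pos A :: R) Failure.
Hypothesis Pr_pos_stuck : forall A R,
  (forall Q', resolvent P A R Q' ->
     (ldnf P Q' Failure /\ Pr Q' Failure) \/ (ldnf P Q' Stuck /\ Pr Q' Stuck)) ->
  (exists Q', resolvent P A R Q' /\ ldnf P Q' Stuck /\ Pr Q' Stuck) ->
  Pr (Pos A :: R) Stuck.
Hypothesis Pr_neg_flounder : forall A R, ~ ground_atom A -> Pr (Neg A :: R) Stuck.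
Hypothesis Pr_neg_sub_succ : forall A R, ground_atom A -> ldnf P [Pos A] Success ->
  Pr [Pos A] Success -> Pr (Neg A :: R) Failure.
Hypothesis Pr_neg_sub_fail : forall A R o, ground_atom A -> ldnf P [Pos A] Failure ->
  Pr [Pos A] Failure -> ldnf P R o -> Pr R o -> Pr (Neg A :: R) o.
Hypothesis Pr_neg_sub_stuck : forall A R, ground_atom A -> ldnf P [Pos A] Stuck ->
  Pr [Pos A] Stuck -> Pr (Neg A :: R) Stuck.

(* The generated principle of [ldnf] gives no induction hypotheses under the
   quantifiers over resolvents. *)
Fixpoint ldnf_ind_strong Q o (H : ldnf P Q o) {struct H} : Pr Q o :=
  match H in ldnf _ Q o return Pr Q o with
  | @ldnf_nil _ _ => Pr_nil
  | @ldnf_pos_succ _ _ A R Hall Hex =>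
      @Pr_pos_succ A R
        (fun Q' HR => match Hall Q' HR with
                      | ex_intro _ o Hl => ex_intro _ o (conj Hl (@ldnf_ind_strong _ _ Hl)) end)
        (match Hex with
         | ex_intro _ Q' (conj HR Hl) =>
             ex_intro _ Q' (conj HR (conj Hl (@ldnf_ind_strong _ _ Hl))) end)
  | @ldnf_pos_fail _ _ A R Hall =>
      @Pr_pos_fail A R (fun Q' HR => conj (Hall Q' HR) (@ldnf_ind_strong _ _ (Hall Q' HR)))
  | @ldnf_pos_stuck _ _ A R Hall Hex =>
      @Pr_pos_stuck A R
        (fun Q' HR => match Hall Q' HR with
                      | or_introl Hl => or_introl (conj Hl (@ldnf_ind_strong _ _ Hl))
                      | or_intror Hl => or_intror (conj Hl (@ldnf_ind_strong _ _ Hl)) end)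
        (match Hex with
         | ex_intro _ Q' (conj HR Hl) =>
             ex_intro _ Q' (conj HR (conj Hl (@ldnf_ind_strong _ _ Hl))) end)
  | @ldnf_neg_flounder _ _ A R Hg => @Pr_neg_flounder A R Hg
  | @ldnf_neg_sub_succ _ _ A R Hg Hs => @Pr_neg_sub_succ A R Hg Hs (@ldnf_ind_strong _ _ Hs)
  | @ldnf_neg_sub_fail _ _ A R o Hg Hs Hr =>
      @Pr_neg_sub_fail A R o Hg Hs (@ldnf_ind_strong _ _ Hs) Hr (@ldnf_ind_strong _ _ Hr)
  | @ldnf_neg_sub_stuck _ _ A R Hg Hs => @Pr_neg_sub_stuck A R Hg Hs (@ldnf_ind_strong _ _ Hs)
  end.

End LdnfInduction.

(** * Substitutions and renamings *)

Section Substitution.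
Variable Sig : Type.
Implicit Types (t : term Sig) (a : atom Sig) (l : literal Sig) (q : query Sig)
  (s : nat -> term Sig).

Lemma term_ind_nested (Pr : term Sig -> Prop) :
  (forall x, Pr (Var x)) ->
  (forall f ts, Forall Pr ts -> Pr (Fn f ts)) ->
  forall t, Pr t.
Proof.
  intros HV HF. fix IH 1. intros [x|f ts].
  - apply HV.
  - apply HF. induction ts as [|t ts IHts]; constructor; auto.
Qed.

Lemma tsubst_ext t s1 s2 :
  (forall x, In x (tvars t) -> s1 x = s2 x) -> tsubst s1 t = tsubst s2 t.
Proof.
  induction t as [x|f ts IH] using term_ind_nested; simpl; intros H.
  - auto.
  - f_equal. apply map_ext_in. intros u Hu. rewrite Forall_forall in IH.
    apply IH; auto. intros x Hx; apply H, in_flat_map; eauto.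
Qed.

Lemma tsubst_eq_on_vars t s1 s2 :
  tsubst s1 t = tsubst s2 t -> forall x, In x (tvars t) -> s1 x = s2 x.
Proof.
  induction t as [y|f ts IH] using term_ind_nested; simpl.
  - intros H x [<-|[]]. exact H.
  - intros H x Hx. injection H as H. apply in_flat_map in Hx as [u [Hu Hx]].
    rewrite Forall_forall in IH. eapply (IH u Hu); [|exact Hx].
    clear IH Hx. induction ts as [|v ts IHts]; simpl in *; [tauto|].
    injection H as H1 H2. destruct Hu as [<-|Hu]; auto.
Qed.

Lemma tsubst_comp t s1 s2 :
  tsubst s1 (tsubst s2 t) = tsubst (fun x => tsubst s1 (s2 x)) t.
Proof.
  induction t as [x|f ts IH] using term_ind_nested; simpl; auto.
  f_equal. rewrite map_map. apply map_ext_in. rewrite Forall_forall in IH. auto.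
Qed.

Lemma tsubst_id t : tsubst (@Var Sig) t = t.
Proof.
  induction t as [x|f ts IH] using term_ind_nested; simpl; auto.
  f_equal. rewrite <- (map_id ts) at 2. apply map_ext_in. rewrite Forall_forall in IH. auto.
Qed.

Lemma in_tvars_tsubst t s x :
  In x (tvars (tsubst s t)) <-> exists z, In z (tvars t) /\ In x (tvars (s z)).
Proof.
  induction t as [y|f ts IH] using term_ind_nested; simpl.
  - split; [eauto|]. intros [z [[<-|[]] H]]. exact H.
  - rewrite flat_map_concat_map, map_map, <- flat_map_concat_map, in_flat_map.
    rewrite Forall_forall in IH. split.
    + intros [u [Hu Hx]]. apply IH in Hx as [z [Hz Hxz]]; auto.
      exists z. split; auto. apply in_flat_map. eauto.
    + intros [z [Hz Hxz]]. apply in_flat_map in Hz as [u [Hu Hz]].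
      exists u. split; auto. apply IH; eauto.
Qed.

Definition aterm a : term Sig := Fn (fst a) (snd a).

Lemma aterm_inj a b : aterm a = aterm b -> a = b.
Proof. destruct a, b. unfold aterm. simpl. intros H. injection H as -> ->. reflexivity. Qed.

Lemma aterm_asubst a s : aterm (asubst s a) = tsubst s (aterm a).
Proof. reflexivity. Qed.

Lemma unifier_aterm s a b : unifier s a b <-> tsubst s (aterm a) = tsubst s (aterm b).
Proof.
  unfold unifier. rewrite <- !aterm_asubst. split; [congruence|apply aterm_inj].
Qed.

Lemma asubst_ext a s1 s2 :
  (forall x, In x (avars a) -> s1 x = s2 x) -> asubst s1 a = asubst s2 a.
Proof. intros H. apply aterm_inj. rewrite !aterm_asubst. apply tsubst_ext, H. Qed.

Lemma asubst_eq_on_vars a s1 s2 :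
  asubst s1 a = asubst s2 a -> forall x, In x (avars a) -> s1 x = s2 x.
Proof. intros H. apply (tsubst_eq_on_vars (aterm a)). rewrite <- !aterm_asubst, H. reflexivity. Qed.

Lemma asubst_comp a s1 s2 :
  asubst s1 (asubst s2 a) = asubst (fun x => tsubst s1 (s2 x)) a.
Proof. apply aterm_inj. rewrite !aterm_asubst. apply tsubst_comp. Qed.

Lemma asubst_id a : asubst (@Var Sig) a = a.
Proof. apply aterm_inj. rewrite aterm_asubst. apply tsubst_id. Qed.

Lemma in_avars_asubst a s x :
  In x (avars (asubst s a)) <-> exists z, In z (avars a) /\ In x (tvars (s z)).
Proof. exact (in_tvars_tsubst (aterm a) s x). Qed.

Lemma lsubst_ext l s1 s2 :
  (forall x, In x (lvars l) -> s1 x = s2 x) -> lsubst s1 l = lsubst s2 l.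
Proof. destruct l; simpl; intros; f_equal; apply asubst_ext; auto. Qed.

Lemma lsubst_comp l s1 s2 :
  lsubst s1 (lsubst s2 l) = lsubst (fun x => tsubst s1 (s2 x)) l.
Proof. destruct l; simpl; f_equal; apply asubst_comp. Qed.

Lemma lsubst_id l : lsubst (@Var Sig) l = l.
Proof. destruct l; simpl; f_equal; apply asubst_id. Qed.

Lemma in_lvars_lsubst l s x :
  In x (lvars (lsubst s l)) <-> exists z, In z (lvars l) /\ In x (tvars (s z)).
Proof. destruct l; apply in_avars_asubst. Qed.

Lemma qsubst_ext q s1 s2 :
  (forall x, In x (qvars q) -> s1 x = s2 x) -> qsubst s1 q = qsubst s2 q.
Proof.
  intros H. apply map_ext_in. intros l Hl. apply lsubst_ext.
  intros x Hx; apply H, in_flat_map; eauto.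
Qed.

Lemma qsubst_comp q s1 s2 :
  qsubst s1 (qsubst s2 q) = qsubst (fun x => tsubst s1 (s2 x)) q.
Proof. unfold qsubst. rewrite map_map. apply map_ext. intros; apply lsubst_comp. Qed.

Lemma qsubst_id q : qsubst (@Var Sig) q = q.
Proof. unfold qsubst. rewrite <- (map_id q) at 2. apply map_ext. apply lsubst_id. Qed.

Lemma qsubst_app q1 q2 s : qsubst s (q1 ++ q2) = qsubst s q1 ++ qsubst s q2.
Proof. apply map_app. Qed.

Lemma in_qvars_app q1 q2 x : In x (qvars (q1 ++ q2)) <-> In x (qvars q1) \/ In x (qvars q2).
Proof. unfold qvars. rewrite flat_map_app. apply in_app_iff. Qed.

Lemma in_qvars_cons l q x : In x (qvars (l :: q)) <-> In x (lvars l) \/ In x (qvars q).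
Proof. apply in_app_iff. Qed.

Lemma in_qvars_qsubst q s x :
  In x (qvars (qsubst s q)) <-> exists z, In z (qvars q) /\ In x (tvars (s z)).
Proof.
  induction q as [|l q IH]; [simpl; firstorder|].
  change (qsubst s (l :: q)) with (lsubst s l :: qsubst s q).
  rewrite in_qvars_cons, in_lvars_lsubst, IH. setoid_rewrite in_qvars_cons. firstorder.
Qed.

Lemma qsubst_fixes q s :
  (forall x, In x (qvars q) -> s x = Var x) -> qsubst s q = q.
Proof. intros H. rewrite <- (qsubst_id q) at 2. apply qsubst_ext, H. Qed.

Definition subst_upd s (x : nat) (e : term Sig) : nat -> term Sig :=
  fun z => if Nat.eqb z x then e else s z.

Lemma subst_upd_eq s x e : subst_upd s x e x = e.
Proof. unfold subst_upd. rewrite Nat.eqb_refl. reflexivity. Qed.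

Lemma subst_upd_neq s x e z : z <> x -> subst_upd s x e z = s z.
Proof. unfold subst_upd. intros H. destruct (Nat.eqb_spec z x); congruence. Qed.

End Substitution.

Definition inverse_maps (b b' : nat -> nat) : Prop :=
  (forall x, b' (b x) = x) /\ (forall x, b (b' x) = x).

Definition ren {Sig} (b : nat -> nat) : nat -> term Sig := fun v => Var (b v).
Arguments ren {Sig} b v /.

Lemma inverse_maps_sym b b' : inverse_maps b b' -> inverse_maps b' b.
Proof. unfold inverse_maps; tauto. Qed.

Lemma inverse_maps_inj b b' : inverse_maps b b' -> forall x y, b x = b y -> x = y.
Proof. intros [H _] x y E. rewrite <- (H x), <- (H y), E. reflexivity. Qed.

Definition transpose (a c n : nat) : nat :=
  if Nat.eqb n a then c else if Nat.eqb n c then a else n.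

Lemma transpose_involutive a c n : transpose a c (transpose a c n) = n.
Proof.
  unfold transpose. destruct (Nat.eqb_spec n a), (Nat.eqb_spec n c); subst;
  repeat match goal with |- context [Nat.eqb ?x ?y] => destruct (Nat.eqb_spec x y) end; lia.
Qed.

Lemma transpose_other a c n : n <> a -> n <> c -> transpose a c n = n.
Proof.
  unfold transpose. intros. destruct (Nat.eqb_spec n a), (Nat.eqb_spec n c); congruence.
Qed.

Lemma inj_on_extends_to_bijection (V : list nat) (rho : nat -> nat) :
  (forall u v, In u V -> In v V -> rho u = rho v -> u = v) ->
  exists b b', inverse_maps b b' /\ forall v, In v V -> b v = rho v.
Proof.
  induction V as [|v V IH]; intros Hinj.
  - exists (fun x => x), (fun x => x). split; [split; auto|]. intros _ [].
  - destruct IH as [b [b' [[H1 H2] Hag]]]; [intros; apply Hinj; simpl; auto|].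
    destruct (in_dec Nat.eq_dec v V) as [Hv|Hv].
    + exists b, b'. split; [split; auto|]. intros w [<-|Hw]; auto.
    + set (u := b' (rho v)).
      exists (fun n => b (transpose v u n)), (fun n => transpose v u (b' n)).
      split; [split|].
      * intros x. rewrite H1. apply transpose_involutive.
      * intros x. rewrite transpose_involutive. auto.
      * intros w [<-|Hw].
        -- unfold transpose. rewrite Nat.eqb_refl. unfold u. auto.
        -- rewrite transpose_other; auto; [intros ->; contradiction|].
           intros Heq. apply Hv. replace v with w; auto. apply Hinj; simpl; auto.
           rewrite <- Hag by auto. rewrite Heq. unfold u. auto.
Qed.

Lemma in_le_list_max (l : list nat) x : In x l -> x <= list_max l.
Proof.
  intros Hx. pose proof (proj1 (list_max_le l (list_max l)) (le_n _)) as H.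
  rewrite Forall_forall in H. auto.
Qed.

Section Renaming.
Variable Sig : Type.
Implicit Types (a : atom Sig) (q : query Sig) (c : clause Sig).

Lemma qsubst_ren_inverse q b b' : inverse_maps b b' ->
  qsubst (ren b') (qsubst (ren b) q) = q.
Proof.
  intros [H1 _]. rewrite qsubst_comp. apply qsubst_fixes. intros x _. simpl. rewrite H1. auto.
Qed.

Lemma asubst_ren_inverse a b b' : inverse_maps b b' ->
  asubst (ren b') (asubst (ren b) a) = a.
Proof.
  intros [H1 _]. rewrite asubst_comp. rewrite <- (asubst_id a) at 2.
  apply asubst_ext. intros x _. simpl. rewrite H1. auto.
Qed.

Lemma in_tvars_ren x b y : In x (tvars (@ren Sig b y)) <-> x = b y.
Proof. simpl. intuition. Qed.

Lemma ren_notin_qvars q b b' y : inverse_maps b b' ->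
  ~ In y (qvars q) -> ~ In (b y) (qvars (qsubst (ren b) q)).
Proof.
  intros Hb Hy Hin. apply in_qvars_qsubst in Hin as [z [Hz Hx]].
  apply in_tvars_ren, (inverse_maps_inj Hb) in Hx. subst. auto.
Qed.

Lemma ren_notin_avars a b b' y : inverse_maps b b' ->
  ~ In y (avars a) -> ~ In (b y) (avars (asubst (ren b) a)).
Proof.
  intros Hb Hy Hin. apply in_avars_asubst in Hin as [z [Hz Hx]].
  apply in_tvars_ren, (inverse_maps_inj Hb) in Hx. subst. auto.
Qed.

Lemma csubst_comp c s1 s2 :
  csubst s1 (csubst s2 c) = csubst (fun x => tsubst s1 (s2 x)) c.
Proof. unfold csubst; simpl. f_equal; [apply asubst_comp|apply qsubst_comp]. Qed.

Lemma in_cvars_csubst c s x :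
  In x (cvars (csubst s c)) <-> exists z, In z (cvars c) /\ In x (tvars (s z)).
Proof.
  unfold cvars, csubst; simpl. rewrite in_app_iff, in_avars_asubst, in_qvars_qsubst.
  setoid_rewrite in_app_iff. firstorder.
Qed.

Lemma in_cvars_ren c r x :
  In x (cvars (csubst (ren r) c)) -> exists z, In z (cvars c) /\ x = r z.
Proof. intros [z [Hz Hx]]%in_cvars_csubst. apply in_tvars_ren in Hx. eauto. Qed.

Lemma variant_apart c (V : list nat) :
  exists r r', inverse_maps r r' /\ forall x, In x (cvars (csubst (ren r) c)) -> ~ In x V.
Proof.
  set (N := S (list_max V)).
  destruct (@inj_on_extends_to_bijection (cvars c) (fun x => x + N)) as [r [r' [Hr Hag]]].
  { intros u v _ _. lia. }
  exists r, r'. split; auto. intros x [z [Hz ->]]%in_cvars_ren Hin.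
  apply in_le_list_max in Hin. rewrite Hag in Hin by auto. unfold N in Hin. lia.
Qed.

Lemma ground_atom_ren a b : ground_atom (asubst (ren b) a) <-> ground_atom a.
Proof.
  unfold ground_atom. split; intros H.
  - destruct (avars a) as [|z l] eqn:E; auto. exfalso.
    assert (Hb : In (b z) (avars (asubst (ren b) a))).
    { apply in_avars_asubst. exists z. rewrite E. simpl; auto. }
    rewrite H in Hb. destruct Hb.
  - destruct (avars (asubst (ren b) a)) as [|z l] eqn:E; auto. exfalso.
    assert (Hz : In z (avars (asubst (ren b) a))) by (rewrite E; simpl; auto).
    apply in_avars_asubst in Hz as [w [Hw _]]. rewrite H in Hw. destruct Hw.
Qed.

Lemma resolvent_ren (Pr : program Sig) A R Q' b b' : inverse_maps b b' ->
  resolvent Pr A R Q' ->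
  resolvent Pr (asubst (ren b) A) (qsubst (ren b) R) (qsubst (ren b) Q').
Proof.
  intros [Hb1 Hb2] [c [c' [th [Hin [[r [r' [Hr1 [Hr2 Hc']]]] [Hap [[Hun Hmg] ->]]]]]]].
  exists c, (csubst (ren b) c'), (fun z => tsubst (ren b) (th (b' z))).
  split; [auto|]. split; [|split; [|split; [split|]]].
  - exists (fun x => b (r x)), (fun x => r' (b' x)). split; [|split].
    + intros x. rewrite Hb1, Hr1; auto.
    + intros x. rewrite Hr2, Hb2; auto.
    + subst c'. rewrite csubst_comp. reflexivity.
  - intros x [z [Hz ->]]%in_cvars_ren Hq.
    change (Pos (asubst (ren b) A) :: qsubst (ren b) R) with (qsubst (ren b) (Pos A :: R)) in Hq.
    revert Hq. apply ren_notin_qvars with b'; [split|]; auto.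
  - unfold unifier in *. simpl. rewrite !asubst_comp.
    transitivity (asubst (ren b) (asubst th A)).
    + rewrite asubst_comp. apply asubst_ext. intros x _. simpl. rewrite Hb1. auto.
    + rewrite Hun, asubst_comp. apply asubst_ext. intros x _. simpl. rewrite Hb1. auto.
  - intros sg Hsg. destruct (Hmg (fun z => sg (b z))) as [d Hd].
    + unfold unifier in *. simpl in Hsg. rewrite !asubst_comp in Hsg. exact Hsg.
    + exists (fun w => d (b' w)). intros z. rewrite <- (Hb2 z) at 1. rewrite Hd.
      rewrite tsubst_comp. apply tsubst_ext. intros x _. simpl. rewrite Hb1. auto.
  - unfold csubst; simpl. rewrite <- qsubst_app, !qsubst_comp. apply qsubst_ext.
    intros x _. simpl. rewrite Hb1. reflexivity.
Qed.

Lemma resolvent_ren_inv (Pr : program Sig) A R Q'' b b' : inverse_maps b b' ->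
  resolvent Pr (asubst (ren b) A) (qsubst (ren b) R) Q'' ->
  exists Q', resolvent Pr A R Q' /\ Q'' = qsubst (ren b) Q'.
Proof.
  intros Hb H. exists (qsubst (ren b') Q''). split.
  - apply (resolvent_ren (inverse_maps_sym Hb)) in H.
    rewrite asubst_ren_inverse, qsubst_ren_inverse in H; auto.
  - rewrite qsubst_ren_inverse; auto. apply inverse_maps_sym; auto.
Qed.

Lemma ldnf_ren (Pr : program Sig) Q o : ldnf Pr Q o ->
  forall b b', inverse_maps b b' -> ldnf Pr (qsubst (ren b) Q) o.
Proof.
  induction 1 as [| A R Hall Hex | A R Hall | A R Hall Hex | A R Hg | A R Hg Hs IHs
                 | A R o Hg Hs IHs Hr IHr | A R Hg Hs IHs] using ldnf_ind_strong;
    intros b b' Hb; simpl.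
  - constructor.
  - apply ldnf_pos_succ.
    + intros Q'' HR. destruct (resolvent_ren_inv R Hb HR) as [Q' [HR' ->]].
      destruct (Hall Q' HR') as [o [_ IH]]. eauto.
    + destruct Hex as [Q' [HR [_ IH]]]. exists (qsubst (ren b) Q').
      split; [apply resolvent_ren with b'|eauto]; auto.
  - apply ldnf_pos_fail. intros Q'' HR. destruct (resolvent_ren_inv R Hb HR) as [Q' [HR' ->]].
    apply (proj2 (Hall Q' HR')) with b'; auto.
  - apply ldnf_pos_stuck.
    + intros Q'' HR. destruct (resolvent_ren_inv R Hb HR) as [Q' [HR' ->]].
      destruct (Hall Q' HR') as [[_ IH]|[_ IH]]; eauto.
    + destruct Hex as [Q' [HR [_ IH]]]. exists (qsubst (ren b) Q').
      split; [apply resolvent_ren with b'|eauto]; auto.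
  - apply ldnf_neg_flounder. rewrite ground_atom_ren; auto.
  - apply ldnf_neg_sub_succ; [rewrite ground_atom_ren|apply (IHs b b')]; auto.
  - apply ldnf_neg_sub_fail; [rewrite ground_atom_ren|apply (IHs b b')|apply (IHr b b')]; auto.
  - apply ldnf_neg_sub_stuck; [rewrite ground_atom_ren|apply (IHs b b')]; auto.
Qed.

Lemma ldnf_ren_inv (Pr : program Sig) Q o b b' : inverse_maps b b' ->
  ldnf Pr (qsubst (ren b) Q) o -> ldnf Pr Q o.
Proof.
  intros Hb H. pose proof (ldnf_ren H (inverse_maps_sym Hb)) as H'.
  rewrite qsubst_ren_inverse in H'; auto.
Qed.

Definition query_variant (M M0 : query Sig) : Prop :=
  exists b b', inverse_maps b b' /\ M = qsubst (ren b) M0.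

Lemma ldnf_variant (Pr : program Sig) M M0 o :
  query_variant M M0 -> ldnf Pr M0 o -> ldnf Pr M o.
Proof. intros [b [b' [Hb ->]]] H. exact (ldnf_ren H Hb). Qed.

Lemma query_variant_refl (M : query Sig) : query_variant M M.
Proof.
  exists (fun x => x), (fun x => x). split; [split; auto|]. symmetry. apply qsubst_fixes. auto.
Qed.

End Renaming.

(** * Most general unifiers *)

Section Unifiers.
Variable Sig : Type.
Implicit Types (th s : nat -> term Sig) (a : atom Sig).

(* [th] and [s] are instances of each other on the variables of [s X], so [th] maps
   them injectively to variables. *)
Lemma mgu_image_variant th s a1 a2 X :
  mgu th a1 a2 -> unifier s a1 a2 -> (forall z, tsubst th (s z) = th z) ->
  (forall z, In z (qvars (qsubst s X)) -> s z = Var z) ->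
  query_variant (qsubst th X) (qsubst s X).
Proof.
  intros [_ Hmg] Hu Hfix Hid. destruct (Hmg s Hu) as [d Hd].
  set (K := qsubst s X).
  set (rho := fun z => match th z with Var v => v | Fn _ _ => 0 end).
  assert (Hth : forall z, In z (qvars K) -> th z = Var (rho z)).
  { intros z Hz. pose proof (Hd z) as E. rewrite Hid in E by auto.
    unfold rho. destruct (th z); [reflexivity|discriminate]. }
  destruct (@inj_on_extends_to_bijection (qvars K) rho) as [b [b' [Hb Hag]]].
  { intros u v Hu' Hv' Heq. pose proof (Hd u) as Eu. pose proof (Hd v) as Ev.
    rewrite Hid in Eu, Ev by auto. rewrite Hth in Eu, Ev by auto. rewrite Heq in Eu.
    rewrite <- Ev in Eu. congruence. }
  exists b, b'. split; auto.
  transitivity (qsubst th K).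
  - unfold K. rewrite qsubst_comp. apply qsubst_ext. intros z _. auto.
  - apply qsubst_ext. intros z Hz. rewrite Hth by auto. simpl. rewrite Hag; auto.
Qed.

Lemma mgu_ren_right th A h k k' : inverse_maps k k' -> (forall x, In x (avars A) -> k x = x) ->
  mgu th A h -> mgu (fun z => th (k' z)) A (asubst (ren k) h).
Proof.
  intros [Hk1 Hk2] HkA [Hu Hg].
  assert (Hk'A : forall x, In x (avars A) -> k' x = x)
    by (intros x Hx; rewrite <- (HkA x Hx) at 1; apply Hk1).
  split.
  - unfold unifier in *. rewrite asubst_comp.
    transitivity (asubst th A); [apply asubst_ext; intros x Hx; rewrite Hk'A; auto|].
    rewrite Hu. apply asubst_ext. intros x _. simpl. rewrite Hk1. reflexivity.
  - intros sg Hsg. destruct (Hg (fun z => sg (k z))) as [d Hd].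
    + unfold unifier in *. rewrite asubst_comp in Hsg.
      transitivity (asubst sg A); [apply asubst_ext; intros x Hx; rewrite HkA; auto|].
      rewrite Hsg. apply asubst_ext. reflexivity.
    + exists d. intros z. rewrite <- Hd, Hk2. reflexivity.
Qed.

Section Matching.
Variables (s : nat -> term Sig) (G h : atom Sig).
Hypothesis s_matches : asubst s h = G.
Hypothesis h_apart : forall x, In x (avars h) -> ~ In x (avars G).
Hypothesis s_support : forall z, ~ In z (avars h) -> s z = Var z.

Lemma matcher_unifier : unifier s G h.
Proof.
  unfold unifier. rewrite s_matches. rewrite <- (asubst_id G) at 2.
  apply asubst_ext. intros x Hx. apply s_support. intros Hh. exact (h_apart _ Hh Hx).
Qed.

Lemma unifier_factors_matcher sg : unifier sg G h -> forall z, sg z = tsubst sg (s z).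
Proof.
  intros Hsg z. destruct (in_dec Nat.eq_dec z (avars h)) as [Hz|Hz].
  - symmetry. revert z Hz. apply asubst_eq_on_vars.
    rewrite <- asubst_comp, s_matches. exact Hsg.
  - rewrite s_support; auto.
Qed.

Lemma matcher_mgu : mgu s G h.
Proof.
  split; [apply matcher_unifier|]. intros sg Hsg. exists sg. apply unifier_factors_matcher, Hsg.
Qed.

Lemma mgu_variant_of_matcher th X : mgu th G h -> query_variant (qsubst th X) (qsubst s X).
Proof.
  intros Hth. apply mgu_image_variant with G h; auto using matcher_unifier.
  - intros z. symmetry. apply unifier_factors_matcher, Hth.
  - intros z [w [_ Hw]]%in_qvars_qsubst. apply s_support. intros Hz.
    destruct (in_dec Nat.eq_dec w (avars h)) as [Hwh|Hwh].
    + apply (h_apart _ Hz). rewrite <- s_matches. apply in_avars_asubst. eauto.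
    + rewrite s_support in Hw by auto. destruct Hw as [->|[]]. contradiction.
Qed.

End Matching.

(* Outside [W], variables go to pairwise distinct variables beyond those of [th] on [W],
   so a factorisation through [th] on [W] extends to all variables. *)
Definition agree_then_shift th (W : list nat) (N : nat) : nat -> term Sig :=
  fun z => if in_dec Nat.eq_dec z W then th z else Var (z + N).

Lemma mgu_of_general_on th a1 a2 W :
  unifier th a1 a2 ->
  (forall x, In x (avars a1) \/ In x (avars a2) -> In x W) ->
  (forall sg, unifier sg a1 a2 -> exists d, forall z, In z W -> sg z = tsubst d (th z)) ->
  mgu (agree_then_shift th W (S (list_max (flat_map (fun z => tvars (th z)) W)))) a1 a2.
Proof.
  intros Hu HW Hg. set (N := S (list_max (flat_map (fun z => tvars (th z)) W))).
  assert (Hag : forall a, (forall x, In x (avars a) -> In x W) ->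
                  asubst (agree_then_shift th W N) a = asubst th a).
  { intros a Ha. apply asubst_ext. intros x Hx. unfold agree_then_shift.
    destruct (in_dec Nat.eq_dec x W); auto. exfalso; auto. }
  split.
  - unfold unifier. rewrite !Hag; auto.
  - intros sg Hsg. destruct (Hg sg Hsg) as [d Hd].
    exists (fun w => if w <? N then d w else sg (w - N)). intros z. unfold agree_then_shift.
    destruct (in_dec Nat.eq_dec z W) as [Hz|Hz].
    + rewrite Hd by auto. apply tsubst_ext. intros x Hx.
      assert (x < N).
      { apply Nat.lt_succ_r, in_le_list_max, in_flat_map. eauto. }
      destruct (Nat.ltb_spec x N); auto; lia.
    + simpl. destruct (Nat.ltb_spec (z + N) N); [lia|]. f_equal. lia.
Qed.

End Unifiers.

(** * The encoding and its interaction with unification *)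

Section Encoding.
Variable Sig : Type.
Notation MS := (meta_sym Sig).
Implicit Types (t : term Sig) (a : atom Sig) (l : literal Sig) (q : query Sig)
  (s : nat -> term Sig).

Definition lift_subst s : nat -> term MS := fun z => lift_term (s z).

(* Left inverse of [lift_term]; meta-level subterms are sent to a junk variable. *)
Fixpoint unlift (t : term MS) : term Sig :=
  match t with
  | Var x => Var x
  | Fn (Orig f) ts => Fn f (map unlift ts)
  | Fn _ _ => Var 0
  end.

Definition erase (t : term MS) : term MS := lift_term (unlift t).

Lemma lift_tsubst t s : lift_term (tsubst s t) = tsubst (lift_subst s) (lift_term t).
Proof.
  induction t as [x|f ts IH] using term_ind_nested; simpl; auto.
  f_equal. rewrite !map_map. apply map_ext_in. rewrite Forall_forall in IH; auto.
Qed.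

Lemma tvars_lift t : tvars (lift_term t) = tvars t.
Proof.
  induction t as [x|f ts IH] using term_ind_nested; simpl; auto.
  rewrite Forall_forall in IH. induction ts as [|u ts IHts]; simpl; auto.
  rewrite IH, IHts; simpl; auto. intros; apply IH; simpl; auto.
Qed.

Lemma unlift_lift t : unlift (lift_term t) = t.
Proof.
  induction t as [x|f ts IH] using term_ind_nested; simpl; auto.
  f_equal. rewrite map_map. rewrite <- (map_id ts) at 2. apply map_ext_in.
  rewrite Forall_forall in IH. auto.
Qed.

Lemma unlift_tsubst_lift t (s : nat -> term MS) :
  unlift (tsubst s (lift_term t)) = tsubst (fun z => unlift (s z)) t.
Proof.
  induction t as [x|f ts IH] using term_ind_nested; simpl; auto.
  f_equal. rewrite !map_map. apply map_ext_in. rewrite Forall_forall in IH; auto.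
Qed.

Lemma erase_tsubst_lift t (s : nat -> term MS) :
  erase (tsubst s (lift_term t)) = tsubst (fun z => erase (s z)) (lift_term t).
Proof. unfold erase. rewrite unlift_tsubst_lift, lift_tsubst. reflexivity. Qed.

Lemma erase_instance_fixed (t : term MS) (d : nat -> term MS) :
  erase t = tsubst d t -> erase t = t.
Proof.
  unfold erase. induction t as [x|f ts IH] using term_ind_nested; simpl; auto.
  destruct f; simpl; try discriminate.
  intros H. injection H as H. f_equal. rewrite map_map in *.
  rewrite Forall_forall in IH. revert H. induction ts; simpl; auto.
  intros H. injection H as H1 H2. f_equal.
  - apply IH; simpl; auto.
  - apply IHts; auto. intros; apply IH; simpl; auto.
Qed.

Lemma enc_atom_lift a : enc_atom a = lift_term (aterm a).
Proof. reflexivity. Qed.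

Lemma enc_atom_subst a s : enc_atom (asubst s a) = tsubst (lift_subst s) (enc_atom a).
Proof. rewrite !enc_atom_lift, aterm_asubst, lift_tsubst. reflexivity. Qed.

Lemma tvars_enc_atom a : tvars (enc_atom a) = avars a.
Proof. rewrite enc_atom_lift, tvars_lift. reflexivity. Qed.

Lemma enc_lit_subst l s : enc_lit (lsubst s l) = tsubst (lift_subst s) (enc_lit l).
Proof. destruct l; simpl; rewrite enc_atom_subst; auto. Qed.

Lemma in_tvars_enc_lit l x : In x (tvars (enc_lit l)) <-> In x (lvars l).
Proof.
  destruct l as [a|a]; unfold enc_lit, lvars; [|change (tvars (Fn NegS [enc_atom a]))
    with (tvars (enc_atom a) ++ []); rewrite app_nil_r]; rewrite tvars_enc_atom; tauto.
Qed.

Lemma enc_body_subst q s : enc_body (qsubst s q) = tsubst (lift_subst s) (enc_body q).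
Proof.
  induction q as [|l [|l' q] IH]; simpl; auto.
  - apply enc_lit_subst.
  - simpl in IH. rewrite <- IH, enc_lit_subst. reflexivity.
Qed.

Lemma in_tvars_enc_body q x : In x (tvars (enc_body q)) <-> In x (qvars q).
Proof.
  induction q as [|l [|l' q] IH]; [simpl; tauto| |].
  - change (In x (tvars (enc_lit l)) <-> In x (lvars l ++ [])).
    rewrite app_nil_r. apply in_tvars_enc_lit.
  - change (In x (tvars (enc_lit l) ++ tvars (enc_body (l' :: q)) ++ [])
            <-> In x (lvars l ++ qvars (l' :: q))).
    rewrite app_nil_r, !in_app_iff, in_tvars_enc_lit, IH. tauto.
Qed.

Lemma enc_body_notvar q v : enc_body q <> Var v.
Proof. destruct q as [|[] [|l' q]]; discriminate. Qed.

Lemma enc_body_true_inv q : enc_body q = Fn TrueS [] -> q = [].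
Proof. destruct q as [|[] [|l' q]]; intros H; [reflexivity|discriminate..]. Qed.

Lemma enc_body_and_inv q e1 e2 : enc_body q = Fn CommaS [e1; e2] ->
  exists l q', q = l :: q' /\ q' <> [] /\ e1 = enc_lit l /\ e2 = enc_body q'.
Proof.
  destruct q as [|l [|l' q]]; [discriminate|destruct l; discriminate|].
  intros H. injection H as <- <-. exists l, (l' :: q). repeat split. discriminate.
Qed.

Lemma enc_body_neg_inv q e : enc_body q = Fn NegS [e] -> exists A, q = [Neg A] /\ e = enc_atom A.
Proof.
  destruct q as [|[A|A] [|l' q]]; try discriminate. intros H. injection H as <-. eauto.
Qed.

(* Stands for the object query [concat qs]. *)
Definition solve_goals (qs : list (query Sig)) : query MS :=
  map (fun q => Pos (SolveS, [enc_body q])) qs.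

Lemma solve_goals_subst qs s :
  qsubst (lift_subst s) (solve_goals qs) = solve_goals (map (qsubst s) qs).
Proof.
  unfold solve_goals. unfold qsubst at 1. rewrite !map_map. apply map_ext. intros q.
  cbn [lsubst]. unfold asubst. cbn [fst snd map]. rewrite enc_body_subst. reflexivity.
Qed.

Lemma solve_goals_ren qs b :
  qsubst (ren b) (solve_goals qs) = solve_goals (map (qsubst (ren b)) qs).
Proof. apply (solve_goals_subst qs (ren b)). Qed.

Lemma in_qvars_solve_goals qs x : In x (qvars (solve_goals qs)) <-> In x (qvars (concat qs)).
Proof.
  induction qs as [|q qs IH]; simpl; [tauto|].
  change (qvars (solve_goals (q :: qs)))
    with (lvars (Pos (SolveS, [enc_body q])) ++ qvars (solve_goals qs)).
  rewrite in_app_iff, IH, in_qvars_app. unfold lvars, avars. cbn [snd flat_map].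
  rewrite app_nil_r, in_tvars_enc_body. tauto.
Qed.

Lemma concat_map_qsubst qs s : concat (map (qsubst s) qs) = qsubst s (concat qs).
Proof. induction qs; simpl; auto. rewrite qsubst_app, IHqs; auto. Qed.

Lemma solve_goals_cons_inv qs (G : atom MS) Rm : solve_goals qs = Pos G :: Rm ->
  exists q qs', qs = q :: qs' /\ G = (SolveS, [enc_body q]) /\ Rm = solve_goals qs'.
Proof. destruct qs as [|q qs']; simpl; intros H; [discriminate|]. injection H as <- <-. eauto. Qed.

Lemma solve_goals_not_neg qs (G : atom MS) Rm : solve_goals qs <> Neg G :: Rm.
Proof. destruct qs; discriminate. Qed.

Lemma ground_solve a : ground_atom (SolveS, [enc_atom a]) <-> ground_atom a.
Proof.
  unfold ground_atom, avars at 1. cbn [snd flat_map]. rewrite app_nil_r, tvars_enc_atom. tauto.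
Qed.

End Encoding.

Section Abstraction.
Variable Sig : Type.
Notation MS := (meta_sym Sig).

(* [Sig] need not have decidable equality, hence the use of classical choice. *)
Fixpoint index_of (t : term MS) (L : list (term MS)) : nat :=
  match L with
  | [] => 0
  | u :: L' => if excluded_middle_informative (u = t) then 0 else S (index_of t L')
  end.

Lemma nth_index_of t L d : In t L -> nth (index_of t L) L d = t.
Proof.
  induction L as [|u L IH]; simpl; [tauto|]. intros [<-|H].
  - destruct (excluded_middle_informative (u = u)); [auto|congruence].
  - destruct (excluded_middle_informative (u = t)); auto.
Qed.

Fixpoint abstract_meta (L : list (term MS)) (N : nat) (t : term MS) : term Sig :=
  match t with
  | Var v => Var v
  | Fn (Orig f) ts => Fn f (map (abstract_meta L N) ts)
  | Fn _ _ => Var (N + index_of t L)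
  end.

Definition restore_meta (L : list (term MS)) (N : nat) : nat -> term MS :=
  fun n => if n <? N then Var n else nth (n - N) L (Var 0).

Fixpoint meta_subterms (t : term MS) : list (term MS) :=
  match t with
  | Var _ => []
  | Fn (Orig f) ts => flat_map meta_subterms ts
  | Fn _ _ => [t]
  end.

Lemma abstract_meta_tsubst_lift L N (t : term Sig) (s : nat -> term MS) :
  abstract_meta L N (tsubst s (lift_term t)) = tsubst (fun z => abstract_meta L N (s z)) t.
Proof.
  induction t as [x|f ts IH] using term_ind_nested; simpl; auto.
  f_equal. rewrite !map_map. apply map_ext_in. rewrite Forall_forall in IH; auto.
Qed.

Lemma restore_abstract_meta L N (t : term MS) :
  (forall u, In u (meta_subterms t) -> In u L) -> (forall v, In v (tvars t) -> v < N) ->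
  tsubst (restore_meta L N) (lift_term (abstract_meta L N t)) = t.
Proof.
  induction t as [x|f ts IH] using term_ind_nested; intros H1 H2.
  - simpl. unfold restore_meta. destruct (Nat.ltb_spec x N); auto.
    specialize (H2 x); simpl in H2; lia.
  - destruct f as [f| | | | | ]; simpl;
    try (unfold restore_meta; match goal with |- context [(N + ?k) <? N] =>
            destruct (Nat.ltb_spec (N + k) N); [lia|];
            replace (N + k - N) with k by lia end;
         apply nth_index_of; apply H1; simpl; auto; fail).
    f_equal. rewrite !map_map. rewrite Forall_forall in IH.
    rewrite <- (map_id ts) at 2. apply map_ext_in.
    intros u Hu. apply IH; auto.
    + intros w Hw. apply H1. simpl. apply in_flat_map; eauto.
    + intros v Hv. apply H2. simpl. apply in_flat_map; eauto.
Qed.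

(* Abstracting the meta-level subterms of a meta unifier by fresh variables gives an
   object unifier, which factors through the object mgu. *)
Lemma mgu_lift_most_general (th : nat -> term Sig) a b (W : list nat) :
  mgu th a b -> forall sg : nat -> term MS,
  tsubst sg (enc_atom a) = tsubst sg (enc_atom b) ->
  exists d, forall z, In z W -> sg z = tsubst d (lift_term (th z)).
Proof.
  intros [_ Hmg] sg Hsg.
  set (L := flat_map (fun z => meta_subterms (sg z)) W).
  set (N := S (list_max (flat_map (fun z => tvars (sg z)) W))).
  destruct (Hmg (fun z => abstract_meta L N (sg z))) as [d0 Hd0].
  { apply unifier_aterm. rewrite <- !abstract_meta_tsubst_lift, <- !enc_atom_lift, Hsg. auto. }
  exists (fun w => tsubst (restore_meta L N) (lift_term (d0 w))). intros z Hz.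
  rewrite <- (@restore_abstract_meta L N (sg z)).
  - rewrite Hd0, lift_tsubst, tsubst_comp. reflexivity.
  - intros u Hu. apply in_flat_map. eauto.
  - intros v Hv. apply Nat.lt_succ_r, in_le_list_max, in_flat_map. eauto.
Qed.

End Abstraction.

Section ClauseGoal.
Variable Sig : Type.
Notation MS := (meta_sym Sig).
Variables (A h : atom Sig) (bd : query Sig) (y : nat).
Hypothesis y_fresh_A : ~ In y (avars A).
Hypothesis y_fresh_h : ~ In y (avars h).
Hypothesis y_fresh_bd : ~ In y (qvars bd).

Definition clause_goal : atom MS := (ClauseS, [enc_atom A; Var y]).
Definition clause_fact : atom MS := (ClauseS, [enc_atom h; enc_body bd]).

Lemma unifier_clause_goal (s : nat -> term MS) :
  unifier s clause_goal clause_fact <->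
  tsubst s (enc_atom A) = tsubst s (enc_atom h) /\ s y = tsubst s (enc_body bd).
Proof.
  unfold unifier, clause_goal, clause_fact, asubst. cbn [fst snd map]. split.
  - intros H. split.
    + exact (f_equal (fun p => nth 0 (snd p) (Var 0)) H).
    + exact (f_equal (fun p => nth 1 (snd p) (Var 0)) H).
  - intros [-> H]. simpl. rewrite H. reflexivity.
Qed.

Definition set_y (s : nat -> term MS) : nat -> term MS :=
  subst_upd s y (tsubst s (enc_body bd)).

Lemma set_y_unifier (s : nat -> term MS) :
  tsubst s (enc_atom A) = tsubst s (enc_atom h) -> unifier (set_y s) clause_goal clause_fact.
Proof.
  intros Hs. apply unifier_clause_goal.
  assert (Hfix : forall t, ~ In y (tvars t) -> tsubst (set_y s) t = tsubst s t).
  { intros t Ht. apply tsubst_ext. intros x Hx. apply subst_upd_neq. intros ->. contradiction. }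
  rewrite !Hfix; [split; [exact Hs|]| | |]; rewrite ?tvars_enc_atom, ?in_tvars_enc_body; auto.
  apply subst_upd_eq.
Qed.

(* Erasing [th2] away from [y] yields another unifier, which factors through [th2]. *)
Lemma mgu_clause_goal_object (th2 : nat -> term MS) :
  mgu th2 clause_goal clause_fact -> forall z, z <> y -> erase (th2 z) = th2 z.
Proof.
  intros [Hu Hmg] z Hz. apply unifier_clause_goal in Hu as [Hu _].
  destruct (Hmg (set_y (fun x => erase (th2 x)))) as [d Hd].
  { apply set_y_unifier. rewrite !enc_atom_lift, <- !erase_tsubst_lift, <- !enc_atom_lift, Hu.
    reflexivity. }
  apply erase_instance_fixed with d. rewrite <- Hd. unfold set_y. rewrite subst_upd_neq; auto.
Qed.

Lemma mgu_clause_goal_down (th2 : nat -> term MS) (W : list nat) :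
  mgu th2 clause_goal clause_fact -> ~ In y W ->
  (forall x, In x (avars A) \/ In x (avars h) -> In x W) ->
  exists th, mgu th A h /\ (forall z, In z W -> th2 z = lift_term (th z)) /\
             th2 y = tsubst th2 (enc_body bd).
Proof.
  intros Hm HyW HW. pose proof (mgu_clause_goal_object Hm) as Hpure.
  destruct Hm as [Hu Hmg]. apply unifier_clause_goal in Hu as [Hu1 Hu2].
  set (th0 := fun z => unlift (th2 z)).
  assert (Hu0 : unifier th0 A h).
  { apply unifier_aterm. unfold th0. rewrite <- !unlift_tsubst_lift, <- !enc_atom_lift, Hu1.
    reflexivity. }
  eexists. split; [apply (mgu_of_general_on W Hu0 HW)|split; auto].
  - intros sg Hsg. destruct (Hmg (set_y (lift_subst sg))) as [d Hd].
    { apply set_y_unifier. rewrite <- !enc_atom_subst, Hsg. reflexivity. }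
    exists (fun w => unlift (d w)). intros z Hz.
    assert (Hzy : z <> y) by (intros ->; contradiction).
    specialize (Hd z). unfold set_y, lift_subst in Hd. rewrite subst_upd_neq in Hd by auto.
    rewrite <- (unlift_lift (sg z)), Hd, <- (Hpure z Hzy).
    unfold erase, th0. rewrite unlift_tsubst_lift. reflexivity.
  - intros z Hz. unfold agree_then_shift. destruct (in_dec Nat.eq_dec z W); [|tauto].
    unfold th0. symmetry. apply Hpure. intros ->. contradiction.
Qed.

Lemma mgu_clause_goal_up (th : nat -> term Sig) (W : list nat) :
  mgu th A h -> ~ In y W ->
  (forall x, In x (avars A) \/ In x (avars h) \/ In x (qvars bd) -> In x W) ->
  exists th2, mgu th2 clause_goal clause_fact /\
    (forall z, In z W -> th2 z = lift_term (th z)) /\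
    th2 y = tsubst (lift_subst th) (enc_body bd).
Proof.
  intros Hm HyW HW. set (th0 := set_y (lift_subst th)).
  assert (Hu0 : unifier th0 clause_goal clause_fact).
  { apply set_y_unifier. rewrite <- !enc_atom_subst. destruct Hm as [-> _]. reflexivity. }
  assert (HW' : forall x, In x (avars clause_goal) \/ In x (avars clause_fact) -> In x (y :: W)).
  { intros x Hx. unfold clause_goal, clause_fact, avars in Hx. cbn [snd flat_map tvars] in Hx.
    rewrite !app_nil_r, !in_app_iff, in_tvars_enc_body, !tvars_enc_atom in Hx. simpl.
    destruct Hx as [[Hx|[Hx|[]]]|[Hx|Hx]]; auto. }
  eexists. split; [apply (mgu_of_general_on (y :: W) Hu0 HW')|split].
  - intros sg Hsg. apply unifier_clause_goal in Hsg as [Hs1 Hs2].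
    destruct (mgu_lift_most_general W Hm Hs1) as [d Hd]. exists d.
    intros z [<-|Hz]; unfold th0, set_y.
    + rewrite subst_upd_eq, Hs2, tsubst_comp. apply tsubst_ext.
      intros x Hx%in_tvars_enc_body. rewrite Hd by auto. reflexivity.
    + rewrite subst_upd_neq by (intros ->; contradiction). auto.
  - intros z Hz. unfold agree_then_shift. destruct (in_dec Nat.eq_dec z (y :: W)) as [_|n];
      [|simpl in n; tauto].
    unfold th0, set_y. rewrite subst_upd_neq by (intros ->; contradiction). reflexivity.
  - unfold agree_then_shift. destruct (in_dec Nat.eq_dec y (y :: W)) as [_|n]; [|simpl in n; tauto].
    unfold th0, set_y. apply subst_upd_eq.
Qed.

End ClauseGoal.

(** * Resolution steps of the meta-interpreter *)

Section Resolution.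
Variable Sig : Type.
Implicit Types (G : atom Sig) (R : query Sig) (c : clause Sig).

Definition apart c (Q : query Sig) : Prop := forall x, In x (cvars c) -> ~ In x (qvars Q).

Lemma resolvent_inv (Pr : program Sig) G R M :
  resolvent Pr G R M ->
  exists c r r' th, In c Pr /\ inverse_maps r r' /\ apart (csubst (ren r) c) (Pos G :: R) /\
    mgu th G (Defs.head (csubst (ren r) c)) /\ M = qsubst th (body (csubst (ren r) c) ++ R).
Proof.
  intros [c [c' [th [Hin [[r [r' [Hr1 [Hr2 ->]]]] [Hap [Hm ->]]]]]]].
  exists c, r, r', th. split; [auto|split; [split; auto|auto]].
Qed.

Definition clause_matcher (c' : clause Sig) (s : nat -> term Sig) G (B : query Sig) : Prop :=
  asubst s (Defs.head c') = G /\ (forall z, ~ In z (avars (Defs.head c')) -> s z = Var z) /\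
  qsubst s (body c') = B.

Section Matcher.
Variables (Pr : program Sig) (G : atom Sig) (R : query Sig) (c' : clause Sig)
  (s : nat -> term Sig) (B : query Sig).
Hypothesis c'_apart : apart c' (Pos G :: R).
Hypothesis s_matcher : clause_matcher c' s G B.

Lemma apart_head x : In x (avars (Defs.head c')) -> ~ In x (avars G).
Proof.
  intros Hx HG. apply (c'_apart x); [apply in_app_iff; auto|apply in_app_iff; auto].
Qed.

Lemma matcher_fixes_rest : qsubst s R = R.
Proof.
  apply qsubst_fixes. intros x Hx. apply s_matcher. intros Hh.
  apply (c'_apart x); [apply in_app_iff; auto|apply in_qvars_cons; auto].
Qed.

Lemma resolvent_of_matcher c r r' :
  In c Pr -> inverse_maps r r' -> c' = csubst (ren r) c -> resolvent Pr G R (B ++ R).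
Proof.
  intros Hc [Hr1 Hr2] Ec. destruct s_matcher as [Hs [Hsup HB]].
  exists c, c', s. split; [auto|split; [|split; [|split]]].
  - exists r, r'. auto.
  - exact c'_apart.
  - apply matcher_mgu; auto using apart_head.
  - rewrite qsubst_app, matcher_fixes_rest, HB. reflexivity.
Qed.

Lemma resolvent_variant_of_matcher th :
  mgu th G (Defs.head c') -> query_variant (qsubst th (body c' ++ R)) (B ++ R).
Proof.
  intros Hm. destruct s_matcher as [Hs [Hsup HB]].
  rewrite <- HB. rewrite <- matcher_fixes_rest at 2. rewrite <- qsubst_app.
  apply (mgu_variant_of_matcher Hs); auto using apart_head.
Qed.

End Matcher.

Lemma unifier_unary_inv th p q (t u : term Sig) :
  unifier th (p, [t]) (q, [u]) -> p = q /\ tsubst th t = tsubst th u.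
Proof. unfold unifier, asubst; simpl. intros H. injection H; auto. Qed.

(* Swapping [y] with a fresh variable in the clause variant changes neither the mgu's
   effect on the query nor the resolvent. *)
Lemma resolvent_avoiding (Pr : program Sig) A R Q' y :
  ~ In y (qvars (Pos A :: R)) -> resolvent Pr A R Q' ->
  exists c c1 th, In c Pr /\ variant c1 c /\
    (forall x, In x (cvars c1) -> ~ In x (qvars (Pos A :: R)) /\ x <> y) /\
    mgu th A (Defs.head c1) /\ Q' = qsubst th (body c1 ++ R).
Proof.
  intros Hy [c [c0 [th [Hc [[r [r' [Hr1 [Hr2 Hc0]]]] [Hap [Hm ->]]]]]]].
  set (V := y :: qvars (Pos A :: R) ++ cvars c0).
  set (f := S (list_max V)).
  assert (Hf : forall x, In x V -> x <> f).
  { intros x Hx ->. apply in_le_list_max in Hx. unfold f in Hx. lia. }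
  set (k := transpose y f).
  assert (Hkk : forall z, k (k z) = z) by apply transpose_involutive.
  assert (HkQ : forall x, In x (qvars (Pos A :: R)) -> k x = x).
  { intros x Hx. apply transpose_other; [intros ->; contradiction|].
    apply Hf. right. apply in_app_iff. auto. }
  assert (HkA : forall x, In x (avars A) -> k x = x)
    by (intros x Hx; apply HkQ, in_qvars_cons; auto).
  exists c, (csubst (ren k) c0), (fun z => th (k z)). split; [auto|split; [|split; [|split]]].
  - exists (fun x => k (r x)), (fun x => r' (k x)). split; [|split].
    + intros x. rewrite Hkk, Hr1. auto.
    + intros x. rewrite Hr2, Hkk. auto.
    + rewrite Hc0, csubst_comp. reflexivity.
  - intros x [z [Hz ->]]%in_cvars_ren. destruct (Nat.eq_dec z y) as [->|Hzy].
    + unfold k, transpose. rewrite Nat.eqb_refl. split.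
      * intros Hx. apply (Hf f); [|reflexivity]. right. apply in_app_iff. auto.
      * intros E. apply (Hf y); [left; reflexivity|auto].
    + assert (Hzf : z <> f)
        by (intros ->; apply (Hf f); [right; apply in_app_iff; auto|reflexivity]).
      unfold k. rewrite transpose_other by auto. split; [apply Hap; exact Hz|exact Hzy].
  - apply mgu_ren_right; [split; exact Hkk|exact HkA|exact Hm].
  - rewrite !qsubst_app. f_equal.
    + simpl. rewrite qsubst_comp. apply qsubst_ext. intros x _. simpl. rewrite Hkk. auto.
    + apply qsubst_ext. intros x Hx. rewrite HkQ; auto. apply in_qvars_cons. auto.
Qed.

End Resolution.

Section MetaProgram.
Variable Sig : Type.
Notation MS := (meta_sym Sig).
Variable P : program Sig.

Definition meta_prog : program MS := M4 Sig ++ ce P.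

Definition solve_true_clause : clause MS := mkClause (SolveS, [Fn TrueS []]) [].
Definition solve_and_clause : clause MS :=
  mkClause (SolveS, [Fn CommaS [Var 0; Var 1]]) [Pos (SolveS, [Var 0]); Pos (SolveS, [Var 1])].
Definition solve_not_clause : clause MS :=
  mkClause (SolveS, [Fn NegS [Var 0]]) [Neg (SolveS, [Var 0])].
Definition solve_atom_clause : clause MS :=
  mkClause (SolveS, [Var 0]) [Pos (ClauseS, [Var 0; Var 1]); Pos (SolveS, [Var 1])].
Definition ce_clause (c : clause Sig) : clause MS :=
  mkClause (clause_fact (Defs.head c) (body c)) [].

Lemma in_meta_prog c : In c meta_prog ->
  c = solve_true_clause \/ c = solve_and_clause \/ c = solve_not_clause \/
  c = solve_atom_clause \/ exists c0, In c0 P /\ c = ce_clause c0.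
Proof.
  unfold meta_prog. intros [H|H]%in_app_or.
  - destruct H as [<-|[<-|[<-|[<-|[]]]]]; auto 10.
  - apply in_map_iff in H as [c0 [<- H]]. do 4 right. eauto.
Qed.

Lemma in_meta_prog_M4 c : In c (M4 Sig) -> In c meta_prog.
Proof. intros H. apply in_or_app. auto. Qed.

Lemma in_meta_prog_ce c0 : In c0 P -> In (ce_clause c0) meta_prog.
Proof. intros H. apply in_or_app. right. apply in_map_iff. exists c0. auto. Qed.

Lemma ce_clause_ren (c : clause Sig) b :
  csubst (ren b) (ce_clause c) = ce_clause (csubst (ren b) c).
Proof.
  destruct c as [h bd]. unfold ce_clause, clause_fact, csubst. cbn [Defs.head body].
  unfold asubst at 1. cbn [fst snd map].
  change (@ren MS b) with (lift_subst (@ren Sig b)).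
  rewrite <- enc_atom_subst, <- enc_body_subst. reflexivity.
Qed.

Lemma in_cvars_ce_clause (c : clause Sig) x : In x (cvars (ce_clause c)) <-> In x (cvars c).
Proof.
  destruct c as [h bd]. unfold ce_clause, clause_fact, cvars. cbn [Defs.head body].
  unfold avars at 1. cbn [snd flat_map qvars]. unfold qvars at 1. cbn [flat_map].
  rewrite !app_nil_r, in_app_iff, tvars_enc_atom, in_app_iff, in_tvars_enc_body. tauto.
Qed.

Lemma tsubst_fn_inv (t : term MS) (s : nat -> term MS) f ts :
  (forall v, t <> Var v) -> tsubst s t = Fn f ts ->
  exists us, t = Fn f us /\ map (tsubst s) us = ts.
Proof.
  intros Hn H. destruct t as [v|g us]; [exfalso; eapply Hn; eauto|].
  simpl in H. injection H as -> H. eauto.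
Qed.

Lemma in_qvars_unary_cons p (t : term MS) Rm x :
  In x (qvars (Pos (p, [t]) :: Rm)) <-> In x (tvars t) \/ In x (qvars Rm).
Proof.
  rewrite in_qvars_cons. unfold lvars, avars. cbn [snd flat_map]. rewrite app_nil_r. tauto.
Qed.

Section ClauseMatchers.
Variables (r r' : nat -> nat).
Hypothesis r_inv : inverse_maps r r'.

Lemma r1_neq_r0 : r 1 <> r 0.
Proof. intros E. apply (inverse_maps_inj r_inv) in E. discriminate. Qed.

Lemma matcher_solve_true :
  clause_matcher (csubst (ren r) solve_true_clause) (@Var MS) (SolveS, [Fn TrueS []]) [].
Proof. repeat split. Qed.

Lemma matcher_solve_and e1 e2 :
  clause_matcher (csubst (ren r) solve_and_clause)
    (subst_upd (subst_upd (@Var MS) (r 1) e2) (r 0) e1)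
    (SolveS, [Fn CommaS [e1; e2]]) [Pos (SolveS, [e1]); Pos (SolveS, [e2])].
Proof.
  pose proof r1_neq_r0.
  unfold clause_matcher, solve_and_clause, csubst, qsubst, lsubst, asubst. cbn.
  rewrite subst_upd_eq, subst_upd_neq, subst_upd_eq by auto.
  split; [reflexivity|split; [|reflexivity]].
  intros z Hz. rewrite !subst_upd_neq; auto; intros ->; tauto.
Qed.

Lemma matcher_solve_not e :
  clause_matcher (csubst (ren r) solve_not_clause) (subst_upd (@Var MS) (r 0) e)
    (SolveS, [Fn NegS [e]]) [Neg (SolveS, [e])].
Proof.
  unfold clause_matcher, solve_not_clause, csubst, qsubst, lsubst, asubst. cbn.
  rewrite subst_upd_eq. split; [reflexivity|split; [|reflexivity]].
  intros z Hz. rewrite !subst_upd_neq; auto; intros ->; tauto.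
Qed.

Lemma matcher_solve_atom t :
  clause_matcher (csubst (ren r) solve_atom_clause) (subst_upd (@Var MS) (r 0) t)
    (SolveS, [t]) [Pos (ClauseS, [t; Var (r 1)]); Pos (SolveS, [Var (r 1)])].
Proof.
  pose proof r1_neq_r0.
  unfold clause_matcher, solve_atom_clause, csubst, qsubst, lsubst, asubst. cbn.
  rewrite subst_upd_eq, subst_upd_neq by auto. split; [reflexivity|split; [|reflexivity]].
  intros z Hz. rewrite !subst_upd_neq; auto; intros ->; tauto.
Qed.

End ClauseMatchers.

Section SolveGoal.
Variables (t : term MS) (Rm : query MS).

Lemma resolvent_solve_true : resolvent meta_prog (SolveS, [Fn TrueS []]) Rm Rm.
Proof.
  destruct (variant_apart solve_true_clause (qvars (Pos (SolveS, [Fn TrueS []]) :: Rm)))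
    as [r [r' [Hr Hap]]].
  exact (resolvent_of_matcher meta_prog Hap (matcher_solve_true r)
           (@in_meta_prog_M4 solve_true_clause ltac:(simpl; tauto)) Hr eq_refl).
Qed.

Lemma resolvent_solve_and e1 e2 :
  resolvent meta_prog (SolveS, [Fn CommaS [e1; e2]]) Rm
    (Pos (SolveS, [e1]) :: Pos (SolveS, [e2]) :: Rm).
Proof.
  destruct (variant_apart solve_and_clause (qvars (Pos (SolveS, [Fn CommaS [e1; e2]]) :: Rm)))
    as [r [r' [Hr Hap]]].
  exact (resolvent_of_matcher meta_prog Hap (matcher_solve_and Hr e1 e2)
           (@in_meta_prog_M4 solve_and_clause ltac:(simpl; tauto)) Hr eq_refl).
Qed.

Lemma resolvent_solve_not e :
  resolvent meta_prog (SolveS, [Fn NegS [e]]) Rm (Neg (SolveS, [e]) :: Rm).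
Proof.
  destruct (variant_apart solve_not_clause (qvars (Pos (SolveS, [Fn NegS [e]]) :: Rm)))
    as [r [r' [Hr Hap]]].
  exact (resolvent_of_matcher meta_prog Hap (matcher_solve_not r e)
           (@in_meta_prog_M4 solve_not_clause ltac:(simpl; tauto)) Hr eq_refl).
Qed.

Lemma resolvent_solve_atom : exists y,
  ~ In y (tvars t) /\ ~ In y (qvars Rm) /\
  resolvent meta_prog (SolveS, [t]) Rm (Pos (ClauseS, [t; Var y]) :: Pos (SolveS, [Var y]) :: Rm).
Proof.
  destruct (variant_apart solve_atom_clause (qvars (Pos (SolveS, [t]) :: Rm)))
    as [r [r' [Hr Hap]]].
  assert (Hy : ~ In (r 1) (qvars (Pos (SolveS, [t]) :: Rm))) by (apply Hap; simpl; auto 10).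
  rewrite in_qvars_unary_cons in Hy. exists (r 1). split; [tauto|split; [tauto|]].
  exact (resolvent_of_matcher meta_prog Hap (matcher_solve_atom Hr t)
           (@in_meta_prog_M4 solve_atom_clause ltac:(simpl; tauto)) Hr eq_refl).
Qed.

Lemma resolvent_solve_cases M' : (forall v, t <> Var v) ->
  resolvent meta_prog (SolveS, [t]) Rm M' ->
  (t = Fn TrueS [] /\ query_variant M' Rm) \/
  (exists e1 e2, t = Fn CommaS [e1; e2] /\
     query_variant M' (Pos (SolveS, [e1]) :: Pos (SolveS, [e2]) :: Rm)) \/
  (exists e, t = Fn NegS [e] /\ query_variant M' (Neg (SolveS, [e]) :: Rm)) \/
  (exists y, ~ In y (tvars t) /\ ~ In y (qvars Rm) /\
     query_variant M' (Pos (ClauseS, [t; Var y]) :: Pos (SolveS, [Var y]) :: Rm)).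
Proof.
  intros Hn HR. apply resolvent_inv in HR as [c [r [r' [th [Hin [Hr [Hap [Hm ->]]]]]]]].
  pose proof (proj1 Hm) as Hu.
  apply in_meta_prog in Hin as [->|[->|[->|[->|[c0 [_ ->]]]]]].
  - apply unifier_unary_inv in Hu as [_ Hu].
    apply tsubst_fn_inv in Hu as [[|e us] [-> Hus]]; [|discriminate|exact Hn].
    left. split; [reflexivity|].
    exact (resolvent_variant_of_matcher Hap (matcher_solve_true r) Hm).
  - apply unifier_unary_inv in Hu as [_ Hu].
    apply tsubst_fn_inv in Hu as [[|e1 [|e2 [|e3 us]]] [-> Hus]]; try discriminate; [|exact Hn].
    right; left. exists e1, e2. split; [reflexivity|].
    exact (resolvent_variant_of_matcher Hap (matcher_solve_and Hr e1 e2) Hm).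
  - apply unifier_unary_inv in Hu as [_ Hu].
    apply tsubst_fn_inv in Hu as [[|e [|e2 us]] [-> Hus]]; try discriminate; [|exact Hn].
    right; right; left. exists e. split; [reflexivity|].
    exact (resolvent_variant_of_matcher Hap (matcher_solve_not r e) Hm).
  - assert (Hy : ~ In (r 1) (qvars (Pos (SolveS, [t]) :: Rm))) by (apply Hap; simpl; auto 10).
    rewrite in_qvars_unary_cons in Hy. do 3 right. exists (r 1). split; [tauto|split; [tauto|]].
    exact (resolvent_variant_of_matcher Hap (matcher_solve_atom Hr t) Hm).
  - exfalso. unfold unifier, asubst in Hu. simpl in Hu. injection Hu. discriminate.
Qed.

End SolveGoal.

(* [clause(t, u)] with [t] headed by a meta symbol: no fact of ce(P) matches it. *)
Definition foreign_clause_goal (M : query MS) : Prop :=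
  exists f ts u Rm, M = Pos (ClauseS, [Fn f ts; u]) :: Rm /\ forall g, f <> Orig g.

Lemma foreign_clause_goal_no_resolvent f ts u Rm M' : (forall g, f <> Orig g) ->
  ~ resolvent meta_prog (ClauseS, [Fn f ts; u]) Rm M'.
Proof.
  intros Hf HR. apply resolvent_inv in HR as [c [r [r' [th [Hin [_ [_ [[Hu _] _]]]]]]]].
  apply in_meta_prog in Hin as [->|[->|[->|[->|[c0 [_ ->]]]]]];
    unfold unifier, asubst in Hu; simpl in Hu; injection Hu; try discriminate.
  intros _ _ Ef. exact (Hf _ Ef).
Qed.

Lemma foreign_clause_goal_fails M : foreign_clause_goal M -> ldnf meta_prog M Failure.
Proof.
  intros [f [ts [u [Rm [-> Hf]]]]]. apply ldnf_pos_fail. intros M' HR. exfalso.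
  exact (foreign_clause_goal_no_resolvent Hf HR).
Qed.

Lemma foreign_clause_goal_outcome M o : foreign_clause_goal M -> ldnf meta_prog M o -> o = Failure.
Proof.
  intros [f [ts [u [Rm [-> Hf]]]]] H. inversion H; subst; auto;
  match goal with Hx : exists M', resolvent _ _ _ M' /\ _ |- _ =>
    destruct Hx as [M' [HM _]]; exfalso; exact (foreign_clause_goal_no_resolvent Hf HM) end.
Qed.

Lemma foreign_clause_goal_variant M M0 :
  query_variant M M0 -> foreign_clause_goal M0 -> foreign_clause_goal M.
Proof.
  intros [b [b' [_ ->]]] [f [ts [u [Rm [-> Hf]]]]]. do 4 eexists. split; [reflexivity|auto].
Qed.

Lemma foreign_clause_goal_enc_body q y Rm :
  (forall A, q <> [Pos A]) -> foreign_clause_goal (Pos (ClauseS, [enc_body q; Var y]) :: Rm).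
Proof.
  intros Hq. destruct q as [|[A|A] [|l' q']];
    try (exfalso; exact (Hq A eq_refl));
    do 4 eexists; (split; [reflexivity|]); intros g; discriminate.
Qed.

End MetaProgram.

(** * Simulation *)

Section ClauseStep.
Variable Sig : Type.
Notation MS := (meta_sym Sig).
Variable P : program Sig.

(* Obtained from [solve(A), solve(qs)] by the fourth clause of M4. *)
Definition clause_step_query (A : atom Sig) (y : nat) (qs : list (query Sig)) : query MS :=
  Pos (clause_goal A y) :: Pos (SolveS, [Var y]) :: solve_goals qs.

Definition neg_step_query (A : atom Sig) (qs : list (query Sig)) : query MS :=
  Neg (SolveS, [enc_atom A]) :: solve_goals qs.

Lemma in_qvars_clause_step_query A y qs x :
  In x (qvars (clause_step_query A y qs)) <->
  In x (avars A) \/ x = y \/ In x (qvars (concat qs)).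
Proof.
  unfold clause_step_query, clause_goal. rewrite !in_qvars_cons.
  unfold lvars, avars at 1 2. cbn [snd flat_map tvars].
  rewrite in_qvars_solve_goals, !app_nil_r, !in_app_iff, tvars_enc_atom. simpl. intuition.
Qed.

Lemma clause_step_query_ren A y qs b :
  qsubst (ren b) (clause_step_query A y qs) =
  clause_step_query (asubst (ren b) A) (b y) (map (qsubst (ren b)) qs).
Proof.
  unfold clause_step_query, clause_goal. cbn [qsubst map lsubst].
  fold (qsubst (ren b) (solve_goals qs)). rewrite solve_goals_ren.
  unfold asubst at 1 2. cbn [fst snd map tsubst ren].
  change (tsubst (ren b) (enc_atom A)) with (tsubst (lift_subst (@ren Sig b)) (enc_atom A)).
  rewrite <- enc_atom_subst. reflexivity.
Qed.

Lemma neg_step_query_ren A qs b :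
  qsubst (ren b) (neg_step_query A qs) =
  neg_step_query (asubst (ren b) A) (map (qsubst (ren b)) qs).
Proof.
  unfold neg_step_query. cbn [qsubst map lsubst].
  fold (qsubst (ren b) (solve_goals qs)). rewrite solve_goals_ren.
  unfold asubst at 1. cbn [fst snd map].
  change (tsubst (ren b) (enc_atom A)) with (tsubst (lift_subst (@ren Sig b)) (enc_atom A)).
  rewrite <- enc_atom_subst. reflexivity.
Qed.

Lemma clause_step_resolvent_eq (th2 : nat -> term MS) (th : nat -> term Sig) y
    (bd : query Sig) qs (W : list nat) :
  (forall z, In z W -> th2 z = lift_term (th z)) ->
  (forall x, In x (qvars bd) -> In x W) -> (forall x, In x (qvars (concat qs)) -> In x W) ->
  th2 y = tsubst th2 (enc_body bd) ->
  qsubst th2 ([] ++ Pos (SolveS, [Var y]) :: solve_goals qs) =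
  solve_goals (qsubst th bd :: map (qsubst th) qs).
Proof.
  intros Hag Hb Hq Hy. cbn [app solve_goals map qsubst lsubst]. f_equal.
  - unfold asubst. cbn [fst snd map tsubst]. rewrite Hy, enc_body_subst. do 3 f_equal.
    apply tsubst_ext. intros x Hx%in_tvars_enc_body. auto.
  - fold (qsubst th2 (solve_goals qs)) (solve_goals (map (qsubst th) qs)).
    rewrite <- solve_goals_subst. apply qsubst_ext. intros x Hx%in_qvars_solve_goals. auto.
Qed.

Definition step_vars (A : atom Sig) (c1 : clause Sig) (qs : list (query Sig)) : list nat :=
  avars A ++ avars (Defs.head c1) ++ qvars (body c1) ++ qvars (concat qs).

Lemma step_vars_fresh A c1 qs y : ~ In y (avars A) -> ~ In y (qvars (concat qs)) ->
  (forall x, In x (cvars c1) -> x <> y) ->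
  ~ In y (avars (Defs.head c1)) /\ ~ In y (qvars (body c1)) /\ ~ In y (step_vars A c1 qs).
Proof.
  intros HyA Hyq Hyc.
  assert (Hh : ~ In y (avars (Defs.head c1)))
    by (intros H; apply (Hyc y); auto; apply in_app_iff; auto).
  assert (Hb : ~ In y (qvars (body c1)))
    by (intros H; apply (Hyc y); auto; apply in_app_iff; auto).
  unfold step_vars. rewrite !in_app_iff. tauto.
Qed.

Lemma clause_step_resolvent_down A y qs M' :
  ~ In y (avars A) -> ~ In y (qvars (concat qs)) ->
  resolvent (meta_prog P) (clause_goal A y) (Pos (SolveS, [Var y]) :: solve_goals qs) M' ->
  exists qs2, resolvent P A (concat qs) (concat qs2) /\ M' = solve_goals qs2.
Proof.
  intros HyA Hyq HR. apply resolvent_inv in HR as [c [r [r' [th2 [Hin [Hr [Hap [Hm ->]]]]]]]].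
  apply in_meta_prog in Hin as [->|[->|[->|[->|[c0 [Hc0 ->]]]]]];
    try (exfalso; destruct Hm as [Hu _]; unfold unifier, asubst in Hu; simpl in Hu;
         injection Hu; intros; discriminate).
  rewrite ce_clause_ren in *. set (c1 := csubst (ren r) c0) in *.
  assert (Hap' : forall x, In x (cvars c1) ->
                   ~ In x (avars A) /\ x <> y /\ ~ In x (qvars (concat qs))).
  { intros x Hx. apply in_cvars_ce_clause, Hap in Hx.
    fold (clause_step_query A y qs) in Hx. rewrite in_qvars_clause_step_query in Hx. tauto. }
  destruct (step_vars_fresh A c1 qs HyA Hyq (fun x Hx => proj1 (proj2 (Hap' x Hx))))
    as [Hyh [Hyb HyW]].
  set (W := step_vars A c1 qs) in *.
  destruct (mgu_clause_goal_down HyA Hyh Hyb W Hm HyW) as [th [Hmg [Hag Hy]]];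
    [intros x Hx; unfold W, step_vars; rewrite !in_app_iff; tauto|].
  exists (qsubst th (body c1) :: map (qsubst th) qs). split.
  - simpl. rewrite concat_map_qsubst, <- qsubst_app.
    exists c0, c1, th. split; [auto|split; [exists r, r'; destruct Hr; auto|split; auto]].
    intros x Hx [Hx'|Hx']%in_qvars_cons; destruct (Hap' x Hx) as [H1 [_ H3]]; auto.
  - apply clause_step_resolvent_eq with W; auto;
      intros x Hx; unfold W, step_vars; rewrite !in_app_iff; tauto.
Qed.

Lemma clause_step_resolvent_up A y qs Q' :
  ~ In y (avars A) -> ~ In y (qvars (concat qs)) ->
  resolvent P A (concat qs) Q' ->
  exists qs2, concat qs2 = Q' /\
    resolvent (meta_prog P) (clause_goal A y) (Pos (SolveS, [Var y]) :: solve_goals qs)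
      (solve_goals qs2).
Proof.
  intros HyA Hyq HR.
  apply (@resolvent_avoiding _ _ _ _ _ y) in HR as [c [c1 [th [Hc [[r [r' [Hr1 [Hr2 Ec1]]]]
    [Hap [Hmg ->]]]]]]]; [|rewrite in_qvars_cons; unfold lvars; tauto].
  assert (Hap' : forall x, In x (cvars c1) ->
                   ~ In x (avars A) /\ x <> y /\ ~ In x (qvars (concat qs))).
  { intros x Hx. destruct (Hap x Hx) as [H1 H2]. rewrite in_qvars_cons in H1. unfold lvars in H1.
    tauto. }
  destruct (step_vars_fresh A c1 qs HyA Hyq (fun x Hx => proj1 (proj2 (Hap' x Hx))))
    as [Hyh [Hyb HyW]].
  set (W := step_vars A c1 qs) in *.
  destruct (mgu_clause_goal_up (body c1) y HyA Hyh Hyb W Hmg HyW) as [th2 [Hm2 [Hag Hy]]];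
    [intros x Hx; unfold W, step_vars; rewrite !in_app_iff; tauto|].
  exists (qsubst th (body c1) :: map (qsubst th) qs). split.
  - simpl. rewrite concat_map_qsubst, qsubst_app. reflexivity.
  - exists (ce_clause c), (ce_clause c1), th2.
    split; [apply in_meta_prog_ce; auto|split; [|split; [|split; [exact Hm2|]]]].
    + exists r, r'. split; [auto|split; [auto|]]. rewrite Ec1. symmetry. apply ce_clause_ren.
    + intros x Hx Hq. apply (proj1 (in_cvars_ce_clause _ _)) in Hx.
      fold (clause_step_query A y qs) in Hq. rewrite in_qvars_clause_step_query in Hq.
      destruct (Hap' x Hx). tauto.
    + assert (HW : forall x, In x (qvars (body c1)) \/ In x (qvars (concat qs)) -> In x W)
        by (intros x Hx; unfold W, step_vars; rewrite !in_app_iff; tauto).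
      symmetry. apply clause_step_resolvent_eq with W; auto.
      rewrite Hy. apply tsubst_ext. intros x Hx%in_tvars_enc_body. rewrite Hag; auto.
Qed.

End ClauseStep.

Section Unfolding.
Variable Sig : Type.
Notation MS := (meta_sym Sig).
Variable P : program Sig.

Lemma single_pos_or_not (q : query Sig) :
  (exists A, q = [Pos A]) \/ forall A, q <> [Pos A].
Proof. destruct q as [|[A|A] [|l q]]; eauto; right; discriminate. Qed.

(* The meta query reached from [solve(q), solve(qs)] by the clause of M4 that matches the
   encoding of [q]; [y] is the fresh variable of the fourth clause. *)
Definition unfold_solve (q : query Sig) (qs : list (query Sig)) (y : nat) : query MS :=
  match q with
  | [] => solve_goals qs
  | [Pos A] => clause_step_query A y qs
  | [Neg A] => neg_step_query A qs
  | l :: q' => solve_goals ([l] :: q' :: qs)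
  end.

Lemma exists_fresh_var (l : list nat) : exists y, ~ In y l.
Proof. exists (S (list_max l)). intros H%in_le_list_max. lia. Qed.

Lemma in_qvars_single_pos (A : atom Sig) y : In y (qvars [Pos A]) <-> In y (avars A).
Proof. unfold qvars. simpl. rewrite app_nil_r. tauto. Qed.

Lemma resolvent_solve_unfold q qs : exists y, ~ In y (qvars (concat (q :: qs))) /\
  resolvent (meta_prog P) (SolveS, [enc_body q]) (solve_goals qs) (unfold_solve q qs y).
Proof.
  destruct (exists_fresh_var (qvars (concat (q :: qs)))) as [y Hy].
  destruct q as [|[A|A] [|l' q']].
  - exists y. split; [exact Hy|apply resolvent_solve_true].
  - destruct (resolvent_solve_atom P (enc_atom A) (solve_goals qs)) as [y' [Hy1 [Hy2 HR]]].
    exists y'. split; [|exact HR]. cbn [concat]. rewrite in_qvars_app, in_qvars_single_pos.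
    rewrite tvars_enc_atom in Hy1. rewrite in_qvars_solve_goals in Hy2. tauto.
  - exists y. split; [exact Hy|apply resolvent_solve_and].
  - exists y. split; [exact Hy|apply resolvent_solve_not].
  - exists y. split; [exact Hy|apply resolvent_solve_and].
Qed.

Lemma resolvent_solve_unfold_inv q qs M' :
  resolvent (meta_prog P) (SolveS, [enc_body q]) (solve_goals qs) M' ->
  foreign_clause_goal M' \/
  exists y, ~ In y (qvars (concat (q :: qs))) /\ query_variant M' (unfold_solve q qs y).
Proof.
  intros HR. destruct (exists_fresh_var (qvars (concat (q :: qs)))) as [y Hy].
  destruct (resolvent_solve_cases (enc_body_notvar q) HR) as
    [[Et HV] | [[e1 [e2 [Et HV]]] | [[e [Et HV]] | [y' [Hy1 [Hy2 HV]]]]]].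
  - apply enc_body_true_inv in Et as ->. right. exists y. auto.
  - apply enc_body_and_inv in Et as [l [[|l' q'] [-> [Hq' [-> ->]]]]]; [contradiction|].
    right. exists y. split; [exact Hy|]. destruct l; exact HV.
  - apply enc_body_neg_inv in Et as [A [-> ->]]. right. exists y. auto.
  - destruct (single_pos_or_not q) as [[A ->]|Hq].
    + right. exists y'. split; [|exact HV]. cbn [concat]. rewrite in_qvars_app, in_qvars_single_pos.
      change (~ In y' (tvars (enc_atom A))) in Hy1. rewrite tvars_enc_atom in Hy1.
      rewrite in_qvars_solve_goals in Hy2. tauto.
    + left. eapply foreign_clause_goal_variant; [exact HV|].
      apply foreign_clause_goal_enc_body, Hq.
Qed.

End Unfolding.

Section MetaToObject.
Variable Sig : Type.
Notation MS := (meta_sym Sig).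
Variable P : program Sig.

(* The outcome [o] of a meta query is also the outcome of the object query it stands for. *)
Definition object_outcome (M : query MS) (o : outcome) : Prop :=
  (forall qs, M = solve_goals qs -> ldnf P (concat qs) o) /\
  (forall A y qs, M = clause_step_query A y qs -> ~ In y (avars A) ->
     ~ In y (qvars (concat qs)) -> ldnf P (Pos A :: concat qs) o) /\
  (forall A qs, M = neg_step_query A qs -> ldnf P (Neg A :: concat qs) o).

Section Variants.
Variables (M : query MS) (o : outcome).
Hypothesis M_outcome : object_outcome M o.

Lemma object_outcome_solve_goals qs : query_variant M (solve_goals qs) -> ldnf P (concat qs) o.
Proof.
  intros [b [b' [Hb ->]]]. apply (ldnf_ren_inv _ Hb).
  rewrite <- concat_map_qsubst. apply (proj1 M_outcome). apply solve_goals_ren.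
Qed.

Lemma object_outcome_clause_step A y qs :
  ~ In y (avars A) -> ~ In y (qvars (concat qs)) ->
  query_variant M (clause_step_query A y qs) -> ldnf P (Pos A :: concat qs) o.
Proof.
  intros HyA Hyq [b [b' [Hb ->]]]. apply (ldnf_ren_inv _ Hb).
  simpl. rewrite <- concat_map_qsubst. apply (proj1 (proj2 M_outcome)) with (b y).
  - apply clause_step_query_ren.
  - apply ren_notin_avars with b'; auto.
  - rewrite concat_map_qsubst. apply ren_notin_qvars with b'; auto.
Qed.

Lemma object_outcome_neg_step A qs :
  query_variant M (neg_step_query A qs) -> ldnf P (Neg A :: concat qs) o.
Proof.
  intros [b [b' [Hb ->]]]. apply (ldnf_ren_inv _ Hb).
  simpl. rewrite <- concat_map_qsubst. apply (proj2 (proj2 M_outcome)). apply neg_step_query_ren.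
Qed.

End Variants.

Lemma object_outcome_unfold q qs y M o : object_outcome M o ->
  ~ In y (qvars (concat (q :: qs))) -> query_variant M (unfold_solve q qs y) ->
  ldnf P (concat (q :: qs)) o.
Proof.
  intros HO Hy HV. destruct q as [|[A|A] [|l' q']].
  - exact (object_outcome_solve_goals HO _ HV).
  - cbn [concat] in Hy. rewrite in_qvars_app, in_qvars_single_pos in Hy.
    apply (object_outcome_clause_step HO) with y; auto.
  - exact (object_outcome_solve_goals HO ([Pos A] :: (l' :: q') :: qs) HV).
  - exact (object_outcome_neg_step HO HV).
  - exact (object_outcome_solve_goals HO ([Neg A] :: (l' :: q') :: qs) HV).
Qed.

Lemma object_outcome_solve_head q qs M' o : o <> Failure ->
  resolvent (meta_prog P) (SolveS, [enc_body q]) (solve_goals qs) M' ->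
  ldnf (meta_prog P) M' o -> object_outcome M' o -> ldnf P (concat (q :: qs)) o.
Proof.
  intros Ho HR HM HO. destruct (resolvent_solve_unfold_inv _ _ HR) as [Hf|[y [Hy HV]]].
  - exfalso. exact (Ho (foreign_clause_goal_outcome Hf HM)).
  - exact (object_outcome_unfold _ _ _ HO Hy HV).
Qed.

Lemma object_outcome_solve_head_fail q qs :
  (forall M', resolvent (meta_prog P) (SolveS, [enc_body q]) (solve_goals qs) M' ->
     object_outcome M' Failure) ->
  ldnf P (concat (q :: qs)) Failure.
Proof.
  intros Hall. destruct (resolvent_solve_unfold P q qs) as [y [Hy HR]].
  exact (object_outcome_unfold _ _ _ (Hall _ HR) Hy (query_variant_refl _)).
Qed.

Lemma ldnf_meta_object_outcome M o : ldnf (meta_prog P) M o -> object_outcome M o.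
Proof.
  induction 1 as [| A R Hall Hex | A R Hall | A R Hall Hex | A R Hg | A R Hg Hs IHs
                 | A R o Hg Hs IHs Hr IHr | A R Hg Hs IHs] using ldnf_ind_strong;
    (split; [|split]); intros *;
    try (intros E; solve [exfalso; eapply solve_goals_not_neg; eauto | discriminate]);
    try (intros E Hy1 Hy2; discriminate).
  - intros E. destruct qs; [constructor|discriminate].
  - intros E. destruct (solve_goals_cons_inv _ (eq_sym E)) as [q [qs' [-> [-> ->]]]].
    destruct Hex as [M' [HR [HM HO]]]. eapply object_outcome_solve_head; eauto. discriminate.
  - intros E Hy1 Hy2. injection E as -> ->. apply ldnf_pos_succ.
    + intros Q' HQ. destruct (clause_step_resolvent_up _ _ Hy1 Hy2 HQ) as [qs2 [<- HR]].
      destruct (Hall _ HR) as [o [_ HO]]. exists o. apply (proj1 HO); auto.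
    + destruct Hex as [M' [HR [_ HO]]].
      destruct (clause_step_resolvent_down _ Hy1 Hy2 HR) as [qs2 [HQ ->]].
      exists (concat qs2). split; auto. apply (proj1 HO); auto.
  - intros E. destruct (solve_goals_cons_inv _ (eq_sym E)) as [q [qs' [-> [-> ->]]]].
    apply object_outcome_solve_head_fail. intros M' HR. apply (Hall _ HR).
  - intros E Hy1 Hy2. injection E as -> ->. apply ldnf_pos_fail.
    intros Q' HQ. destruct (clause_step_resolvent_up _ _ Hy1 Hy2 HQ) as [qs2 [<- HR]].
    apply (proj1 (proj2 (Hall _ HR))); auto.
  - intros E. destruct (solve_goals_cons_inv _ (eq_sym E)) as [q [qs' [-> [-> ->]]]].
    destruct Hex as [M' [HR [HM HO]]]. eapply object_outcome_solve_head; eauto. discriminate.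
  - intros E Hy1 Hy2. injection E as -> ->. apply ldnf_pos_stuck.
    + intros Q' HQ. destruct (clause_step_resolvent_up _ _ Hy1 Hy2 HQ) as [qs2 [<- HR]].
      destruct (Hall _ HR) as [[_ HO]|[_ HO]]; [left|right]; apply (proj1 HO); auto.
    + destruct Hex as [M' [HR [_ HO]]].
      destruct (clause_step_resolvent_down _ Hy1 Hy2 HR) as [qs2 [HQ ->]].
      exists (concat qs2). split; auto. apply (proj1 HO); auto.
  - intros E. injection E as -> ->. apply ldnf_neg_flounder. rewrite <- ground_solve. auto.
  - intros E. injection E as -> ->. rewrite ground_solve in Hg.
    apply ldnf_neg_sub_succ; auto. apply (proj1 IHs [[Pos _]]). reflexivity.
  - intros E. injection E as -> ->. rewrite ground_solve in Hg.
    apply ldnf_neg_sub_fail; auto; [apply (proj1 IHs [[Pos _]])|apply (proj1 IHr)]; reflexivity.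
  - intros E. injection E as -> ->. rewrite ground_solve in Hg.
    apply ldnf_neg_sub_stuck; auto. apply (proj1 IHs [[Pos _]]). reflexivity.
Qed.

End MetaToObject.

Section ObjectToMeta.
Variable Sig : Type.
Notation MS := (meta_sym Sig).
Variable P : program Sig.

Lemma ldnf_pos_of_resolvents (G : atom MS) Rm M0 o :
  resolvent (meta_prog P) G Rm M0 -> ldnf (meta_prog P) M0 o ->
  (forall M', resolvent (meta_prog P) G Rm M' ->
     ldnf (meta_prog P) M' o \/ foreign_clause_goal M') ->
  ldnf (meta_prog P) (Pos G :: Rm) o.
Proof.
  intros H0 HM0 Hall.
  assert (Hfail : forall M', resolvent (meta_prog P) G Rm M' ->
                    ldnf (meta_prog P) M' o \/ ldnf (meta_prog P) M' Failure).
  { intros M' HR. destruct (Hall M' HR); auto using foreign_clause_goal_fails. }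
  destruct o.
  - apply ldnf_pos_succ; [|eauto]. intros M' HR. destruct (Hfail M' HR); eauto.
  - apply ldnf_pos_fail. intros M' HR. destruct (Hfail M' HR); auto.
  - apply ldnf_pos_stuck; [|eauto]. intros M' HR. destruct (Hfail M' HR); auto.
Qed.

(* Unfolding [solve(true)] or [solve((l, q))] strictly decreases this weight. *)
Definition unfold_weight (q : query Sig) : nat :=
  match q with [] => 1 | _ => 2 * length q - 1 end.

Definition goals_weight (qs : list (query Sig)) : nat := list_sum (map unfold_weight qs).

Lemma ldnf_solve_goals_of_steps Q o :
  (Q = [] -> o = Success) ->
  (forall A y qs, Q = Pos A :: concat qs -> ~ In y (avars A) -> ~ In y (qvars (concat qs)) ->
     ldnf (meta_prog P) (clause_step_query A y qs) o) ->
  (forall A qs, Q = Neg A :: concat qs -> ldnf (meta_prog P) (neg_step_query A qs) o) ->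
  forall qs, concat qs = Q -> ldnf (meta_prog P) (solve_goals qs) o.
Proof.
  intros H0 Hpos Hneg qs. remember (goals_weight qs) as n eqn:En. revert qs En.
  induction n as [n IH] using lt_wf_ind. intros [|q qs'] En HQ.
  - simpl in HQ. rewrite H0 by auto. constructor.
  - assert (Hunf : forall y, ~ In y (qvars (concat (q :: qs'))) ->
                     ldnf (meta_prog P) (unfold_solve q qs' y) o).
    { intros y Hy. destruct q as [|[A|A] [|l' q']]; cbn [unfold_solve].
      - apply (IH (goals_weight qs')); [unfold goals_weight in *; simpl in *; lia|auto..].
      - cbn [concat] in Hy. rewrite in_qvars_app, in_qvars_single_pos in Hy.
        apply Hpos; [rewrite <- HQ; reflexivity|tauto|tauto].
      - apply (IH (goals_weight ([Pos A] :: (l' :: q') :: qs'))); auto.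
        unfold goals_weight in *. simpl in *. lia.
      - apply Hneg. rewrite <- HQ. reflexivity.
      - apply (IH (goals_weight ([Neg A] :: (l' :: q') :: qs'))); auto.
        unfold goals_weight in *. simpl in *. lia. }
    destruct (resolvent_solve_unfold P q qs') as [y [Hy HR]].
    apply ldnf_pos_of_resolvents with (unfold_solve q qs' y); auto.
    intros M' HR'. destruct (resolvent_solve_unfold_inv _ _ HR') as [Hf|[y' [Hy' HV]]]; auto.
    left. exact (ldnf_variant HV (Hunf y' Hy')).
Qed.

(* The outcome [o] of an object query is also the outcome of each meta query standing for it. *)
Definition meta_outcome (Q : query Sig) (o : outcome) : Prop :=
  (forall qs, concat qs = Q -> ldnf (meta_prog P) (solve_goals qs) o) /\
  (forall A y qs, Q = Pos A :: concat qs -> ~ In y (avars A) -> ~ In y (qvars (concat qs)) ->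
     ldnf (meta_prog P) (clause_step_query A y qs) o) /\
  (forall A qs, Q = Neg A :: concat qs -> ldnf (meta_prog P) (neg_step_query A qs) o).

Lemma meta_outcome_of_steps Q o : (Q = [] -> o = Success) ->
  (forall A y qs, Q = Pos A :: concat qs -> ~ In y (avars A) -> ~ In y (qvars (concat qs)) ->
     ldnf (meta_prog P) (clause_step_query A y qs) o) ->
  (forall A qs, Q = Neg A :: concat qs -> ldnf (meta_prog P) (neg_step_query A qs) o) ->
  meta_outcome Q o.
Proof. intros H0 Hpos Hneg. split; [|split]; auto. apply ldnf_solve_goals_of_steps; auto. Qed.

Lemma ldnf_object_meta_outcome Q o : ldnf P Q o -> meta_outcome Q o.
Proof.
  induction 1 as [| A R Hall Hex | A R Hall | A R Hall Hex | A R Hg | A R Hg Hs IHs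
                 | A R o Hg Hs IHs Hr IHr | A R Hg Hs IHs] using ldnf_ind_strong;
    apply meta_outcome_of_steps; try (intros; reflexivity); try discriminate; intros *;
    try discriminate; intros E; injection E as <- ->.
  - intros Hy1 Hy2. apply ldnf_pos_succ.
    + intros M' HR. destruct (clause_step_resolvent_down _ Hy1 Hy2 HR) as [qs2 [HQ ->]].
      destruct (Hall _ HQ) as [o [_ HO]]. exists o. apply (proj1 HO); auto.
    + destruct Hex as [Q' [HQ [_ HO]]].
      destruct (clause_step_resolvent_up _ _ Hy1 Hy2 HQ) as [qs2 [<- HR]].
      exists (solve_goals qs2). split; auto. apply (proj1 HO); auto.
  - intros Hy1 Hy2. apply ldnf_pos_fail.
    intros M' HR. destruct (clause_step_resolvent_down _ Hy1 Hy2 HR) as [qs2 [HQ ->]].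
    apply (proj1 (proj2 (Hall _ HQ))); auto.
  - intros Hy1 Hy2. apply ldnf_pos_stuck.
    + intros M' HR. destruct (clause_step_resolvent_down _ Hy1 Hy2 HR) as [qs2 [HQ ->]].
      destruct (Hall _ HQ) as [[_ HO]|[_ HO]]; [left|right]; apply (proj1 HO); auto.
    + destruct Hex as [Q' [HQ [_ HO]]].
      destruct (clause_step_resolvent_up _ _ Hy1 Hy2 HQ) as [qs2 [<- HR]].
      exists (solve_goals qs2). split; auto. apply (proj1 HO); auto.
  - apply ldnf_neg_flounder. rewrite ground_solve. auto.
  - apply ldnf_neg_sub_succ; [rewrite ground_solve; auto|]. apply (proj1 IHs [[Pos A]]). auto.
  - apply ldnf_neg_sub_fail; [rewrite ground_solve; auto| |];
      [apply (proj1 IHs [[Pos A]])|apply (proj1 IHr)]; auto.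
  - apply ldnf_neg_sub_stuck; [rewrite ground_solve; auto|]. apply (proj1 IHs [[Pos A]]). auto.
Qed.

End ObjectToMeta.

Unset Implicit Arguments.

Theorem mainTheorem13 (Sig : Type) (P : program Sig) (S : query Sig -> Prop) :
  ldnf_terminates_wrt P S <->
  ldnf_terminates_wrt (M4 Sig ++ ce P)
    (fun MQ => exists Q, S Q /\ MQ = solve_query Q).
Proof.
  split.
  - intros H MQ [Q [HS ->]]. destruct (H Q HS) as [o Ho]. exists o.
    apply (proj1 (ldnf_object_meta_outcome Ho) [Q]). apply app_nil_r.
  - intros H Q HS. destruct (H (solve_query Q)) as [o Ho]; [eauto|].
    exists o. rewrite <- (app_nil_r Q). exact (proj1 (ldnf_meta_object_outcome Ho) [Q] eq_refl).
Qed.
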